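(* Let $\lambda \geq 0$, $0 \leq \gamma \leq 1$, $0\leq \beta<1$, $\tau \in \mathbb{C}\setminus\{0\}$, $\delta \in \mathbb{N}_0=\{0,1,2,\dots\}$ and $m \in \mathbb{N}$. Let $f(z)=z+\sum_{k=1}^{\infty} a_{mk+1}z^{mk+1}$ belong to the class $\Theta_{\Sigma_m}(\tau,\lambda,\gamma,\delta;\beta)$. Then $$|a_{m+1}| \leq \min\left\{\frac{2|\tau|(1-\beta)}{(\delta+1)\left(1+m(\lambda+\gamma)+\lambda\gamma\left((m+1)^2+1\right)\right)},\ 2\sqrt{\frac{2|\tau|(1-\beta)}{(\delta+1)(\delta+2)(m+1)\Phi_1(\lambda,\gamma,m)}}\right\}$$ and $$|a_{2m+1}| \leq \frac{4|\tau|(1-\beta)}{(\delta+1)(\delta+2)\left(1+2(\lambda+\gamma)m+\lambda\gamma\left((2m+1)^2+1\right)\right)},$$ where $\Phi_1(\lambda,\gamma,m)=1+2(\lambda+\gamma)m+\lambda\gamma\left((2m+1)^2+1\right)$.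
   Context: Let $\mathbb{U}=\{z\in\mathbb{C}:|z|<1\}$ and $m\in\mathbb{N}$. $\mathcal{A}_m$ denotes the class of functions analytic in $\mathbb{U}$ of the form $f(z)=z+\sum_{k=1}^{\infty}a_{mk+1}z^{mk+1}$. $\Sigma_m$ denotes the class of $m$-fold symmetric bi-univalent functions: functions $f\in\mathcal{A}_m$ univalent in $\mathbb{U}$ whose inverse $f^{-1}$ extends to a univalent function $g$ on $\mathbb{U}$; this $g$ has the expansion $g(w)=w-a_{m+1}w^{m+1}+\left[(m+1)a_{m+1}^2-a_{2m+1}\right]w^{2m+1}-\cdots$. For $\delta\in\mathbb{N}_0$ and $h(z)=z+\sum_{k\ge1}c_{mk+1}z^{mk+1}$ analytic in $\mathbb{U}$, the $m$-fold Ruscheweyh derivative is $\mathcal{R}^\delta h(z)=z+\sum_{k=1}^{\infty}\frac{\Gamma(\delta+k+1)}{\Gamma(k+1)\Gamma(\delta+1)}c_{mk+1}z^{mk+1}$. For such $h$ and parameters $\lambda,\gamma,\tau\neq0,\delta$, put $$J_h(z)=1+\frac{1}{\tau}\Big[(1-\lambda)(1-\gamma)\frac{\mathcal{R}^\delta h(z)}{z}+(\lambda(\gamma+1)+\gamma)(\mathcal{R}^\delta h)'(z)+\lambda\gamma\big(z(\mathcal{R}^\delta h)''(z)-2\big)-1\Big].$$ For $0\le\beta<1$, $\Theta_{\Sigma_m}(\tau,\lambda,\gamma,\delta;\beta)$ is the set of $f\in\Sigma_m$ such that $\operatorname{Re}J_f(z)>\beta$ for all $z\in\mathbb{U}$ and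 $\operatorname{Re}J_g(w)>\beta$ for all $w\in\mathbb{U}$, where $g$ is the extension of $f^{-1}$ to $\mathbb{U}$. *)

From Stdlib Require Import Reals Arith ClassicalEpsilon.
From Coquelicot Require Import Coquelicot.

Open Scope R_scope.

Definition in_U (z : C) : Prop := Cmod z < 1.

Definition csum (a : nat -> C) (z : C) : C :=
  epsilon (inhabits (RtoC 0)) (fun l : C => is_pseries a z l).

Definition cderiv (F : C -> C) (z : C) : C :=
  epsilon (inhabits (RtoC 0))
    (fun l : C => @is_derive C_AbsRing C_NormedModule F z l).

Definition analytic_U (h : C -> C) : Prop :=
  exists c : nat -> C, forall z, in_U z -> is_pseries c z (h z).

Definition coeffs_of (h : C -> C) : nat -> C :=
  epsilon (inhabits (fun _ => RtoC 0))
    (fun c : nat -> C => forall z, in_U z -> is_pseries c z (h z)).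

(* coefficient shape of A_m : z + sum_{k>=1} a_{mk+1} z^{mk+1} *)
Definition mfold_coeffs (m : nat) (a : nat -> C) : Prop :=
  a 1%nat = RtoC 1 /\ forall n : nat, (forall k : nat, n <> (m * k + 1)%nat) -> a n = RtoC 0.

Definition in_Am (m : nat) (f : C -> C) : Prop :=
  exists a : nat -> C, mfold_coeffs m a /\ forall z, in_U z -> is_pseries a z (f z).

Definition univalent_U (f : C -> C) : Prop :=
  forall z1 z2, in_U z1 -> in_U z2 -> f z1 = f z2 -> z1 = z2.

(* g is a univalent analytic function on U extending f^{-1} : f(U) -> U *)
Definition inverse_extension (f g : C -> C) : Prop :=
  analytic_U g /\ univalent_U g /\
  forall z, in_U z -> in_U (f z) -> g (f z) = z.

Definition in_Sigma_m (m : nat) (f g : C -> C) : Prop :=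
  in_Am m f /\ univalent_U f /\ inverse_extension f g.

(* coefficients of the m-fold Ruscheweyh derivative R^delta h:
   z + sum_{k>=1} Gamma(delta+k+1)/(Gamma(k+1) Gamma(delta+1)) c_{mk+1} z^{mk+1} *)
Definition rus_coef (m delta : nat) (c : nat -> C) (n : nat) : C :=
  match n with
  | O => RtoC 0
  | S j =>
      if Nat.eqb j 0 then RtoC 1
      else if Nat.eqb (Nat.modulo j m) 0 then
        Cmult (RtoC (INR (fact (delta + Nat.div j m)) /
                     (INR (fact (Nat.div j m)) * INR (fact delta))))
              (c n)
      else RtoC 0
  end.

Definition Rus (m delta : nat) (h : C -> C) : C -> C :=
  fun z => csum (rus_coef m delta (coeffs_of h)) z.

(* R^delta h (z) / z, with its removable singularity at 0 filled (value 1) *)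
Definition Rus_div_z (m delta : nat) (h : C -> C) (z : C) : C :=
  match excluded_middle_informative (z = RtoC 0) with
  | left _ => RtoC 1
  | right _ => Cdiv (Rus m delta h z) z
  end.

Definition J (m delta : nat) (tau : C) (lam gam : R) (h : C -> C) (z : C) : C :=
  let F := Rus m delta h in
  Cplus (RtoC 1)
    (Cmult (Cinv tau)
      (Cminus
        (Cplus
          (Cplus (Cmult (RtoC ((1 - lam) * (1 - gam))) (Rus_div_z m delta h z))
                 (Cmult (RtoC (lam * (gam + 1) + gam)) (cderiv F z)))
          (Cmult (RtoC (lam * gam))
                 (Cminus (Cmult z (cderiv (cderiv F) z)) (RtoC 2))))
        (RtoC 1))).

Definition in_Theta (m : nat) (tau : C) (lam gam : R) (delta : nat) (beta : R)
    (f : C -> C) : Prop :=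
  exists g : C -> C, in_Sigma_m m f g /\
    (forall z, in_U z -> Re (J m delta tau lam gam f z) > beta) /\
    (forall w, in_U w -> Re (J m delta tau lam gam g w) > beta).

Definition Phi1 (lam gam : R) (m : nat) : R :=
  1 + 2 * (lam + gam) * INR m + lam * gam * ((2 * INR m + 1) ^ 2 + 1).

(** Both [J_f] and [J_g] are power series with constant term 1 and real part greater than
    [beta] on the unit disk, so by Carathéodory's lemma each of their higher coefficients has
    modulus at most [2 (1 - beta)].  Their coefficients of order [m] and [2m] are explicit
    multiples of [a_(m+1)], [a_(2m+1)] and of the coefficients [b_(m+1) = - a_(m+1)] and
    [b_(2m+1) = (m+1) a_(m+1)^2 - a_(2m+1)] of [g], which are read off from [g (f z) = z] by
    comparing expansions at 0.  Adding the two estimates of order [2m] eliminates [a_(2m+1)] and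
    bounds [a_(m+1)^2].

    Carathéodory's lemma is proved without integrals: the sums of [p] against the [N]-th roots of
    unity on the circle of radius [r] recover [N p_k r^k] up to aliasing terms that are
    geometrically small, and positivity of [Re p - beta] bounds the result; then [N -> oo] and
    [r -> 1]. *)

From Stdlib Require Import Reals Arith Lra Lia ClassicalEpsilon FunctionalExtensionality.
From Coquelicot Require Import Coquelicot.
Open Scope R_scope.

(** * Finite sums and series *)

Fixpoint fsum (u : nat -> C) (N : nat) : C :=
  match N with O => RtoC 0 | S k => (fsum u k + u k)%C end.

Lemma fsum_ext (u v : nat -> C) N :
  (forall k, (k < N)%nat -> u k = v k) -> fsum u N = fsum v N.
Proof.
  induction N as [|N IH]; intros H; simpl; [reflexivity|].
  rewrite IH by (intros; apply H; lia). rewrite H by lia. reflexivity.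
Qed.

Lemma fsum_plus (u v : nat -> C) N :
  fsum (fun k => u k + v k)%C N = (fsum u N + fsum v N)%C.
Proof. induction N as [|N IH]; simpl; [ring|rewrite IH; ring]. Qed.

Lemma fsum_scal (c : C) (u : nat -> C) N :
  fsum (fun k => c * u k)%C N = (c * fsum u N)%C.
Proof. induction N as [|N IH]; simpl; [ring|rewrite IH; ring]. Qed.

Lemma fsum_const (c : C) N : fsum (fun _ => c) N = (RtoC (INR N) * c)%C.
Proof.
  induction N as [|N IH]; simpl fsum; [simpl; ring|].
  rewrite IH, S_INR, RtoC_plus. ring.
Qed.

Lemma fsum_conj (u : nat -> C) N : Cconj (fsum u N) = fsum (fun k => Cconj (u k)) N.
Proof.
  induction N as [|N IH]; simpl.
  - apply injective_projections; simpl; ring.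
  - rewrite Cplus_conj, IH. reflexivity.
Qed.

Lemma Cmod_fsum_le_Re (u v : nat -> C) N :
  (forall k, (k < N)%nat -> Cmod (u k) <= Re (v k)) -> Cmod (fsum u N) <= Re (fsum v N).
Proof.
  induction N as [|N IH]; intros H; simpl fsum.
  - rewrite Cmod_0. simpl. lra.
  - rewrite re_plus. eapply Rle_trans; [apply Cmod_triangle|].
    apply Rplus_le_compat; [apply IH; intros; apply H|apply H]; lia.
Qed.

Lemma sum_n_fsum (u : nat -> C) n : sum_n u n = fsum u (S n).
Proof.
  induction n as [|n IH].
  - rewrite sum_O. simpl. change (u 0%nat = 0 + u 0%nat)%C. ring.
  - rewrite sum_Sn, IH. reflexivity.
Qed.

Lemma is_series_fsum (u : nat -> C) N :
  (forall k, (N <= k)%nat -> u k = RtoC 0) -> is_series u (fsum u N).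
Proof.
  intros H. apply (filterlim_locally (F := eventually)). intros eps.
  exists N. intros n Hn. rewrite sum_n_fsum.
  replace (fsum u (S n)) with (fsum u N); [apply ball_center|].
  assert (Hle : (N <= S n)%nat) by lia. clear Hn. induction Hle; [reflexivity|].
  simpl. rewrite <- IHHle, H by lia. ring.
Qed.

Lemma is_series_fsum_index (u : nat -> nat -> C) (l : nat -> C) N :
  (forall j, is_series (u j) (l j)) -> is_series (fun k => fsum (fun j => u j k) N) (fsum l N).
Proof.
  intros H. induction N as [|N IH]; simpl.
  - apply (is_series_fsum (fun _ => RtoC 0) 0). reflexivity.
  - exact (is_series_plus _ _ _ _ IH (H N)).
Qed.

Lemma is_series_C_unique (u : nat -> C) l1 l2 :
  is_series u l1 -> is_series u l2 -> l1 = l2.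
Proof. intros H1 H2. exact (filterlim_locally_unique (F := eventually) _ _ _ H1 H2). Qed.

Lemma Cplus_minus_r (y z : C) : (z + minus y z)%C = y.
Proof. unfold minus, plus, opp. simpl. ring. Qed.

Lemma is_series_Cmult_l (c : C) (u : nat -> C) l :
  is_series u l -> is_series (fun n => c * u n)%C (c * l)%C.
Proof. exact (is_series_scal_l c u l). Qed.

Lemma is_series_Cmult_r (c : C) (u : nat -> C) l :
  is_series u l -> is_series (fun n => u n * c)%C (l * c)%C.
Proof.
  intros H. rewrite Cmult_comm. eapply is_series_ext; [|exact (is_series_Cmult_l c u l H)].
  intros n. apply Cmult_comm.
Qed.

Lemma is_series_Cmod_le (u : nat -> C) (v : nat -> R) l s :
  is_series u l -> is_series v s -> (forall n, Cmod (u n) <= v n) -> Cmod l <= s.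
Proof.
  intros Hu Hv Hle.
  assert (Hpart : forall n, Cmod (sum_n u n) <= sum_n v n).
  { induction n as [|n IH]; rewrite ?sum_O, ?sum_Sn; [apply Hle|].
    eapply Rle_trans; [apply Cmod_triangle|]. apply Rplus_le_compat; [exact IH|apply Hle]. }
  assert (Hlim : is_lim_seq (fun n => Cmod (sum_n u n)) (Cmod l)).
  { exact (filterlim_comp _ _ _ _ (fun x : C_NormedModule => norm x) _ _ _ Hu (filterlim_norm l)). }
  exact (is_lim_seq_le _ _ (Cmod l) s Hpart Hlim Hv).
Qed.

Lemma is_series_geom_tail q K : 0 <= q < 1 ->
  is_series (fun l => if (l <? K)%nat then 0 else q ^ l) (q ^ K / (1 - q)).
Proof.
  intros Hq. induction K as [|K IH].
  - replace (q ^ 0 / (1 - q)) with (/ (1 - q)) by (simpl; field; lra).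
    apply is_series_geom. rewrite Rabs_pos_eq; lra.
  - apply is_series_decr_1.
    match goal with |- is_series _ ?l => replace l with (q * (q ^ K / (1 - q)))
      by (simpl; unfold plus, opp; simpl; field; lra) end.
    eapply is_series_ext; [|exact (is_series_scal_l (K := R_AbsRing) q _ _ IH)].
    intros n. change (q * (if (n <? K)%nat then 0 else q ^ n) = if (S n <? S K)%nat then 0 else q ^ S n).
    change (S n <? S K)%nat with (n <? K)%nat. destruct (n <? K)%nat; simpl; ring.
Qed.

Lemma Cmod_series_le_geom_tail (u : nat -> C) l K B q :
  is_series u l -> 0 <= q < 1 ->
  (forall k, (k < K)%nat -> u k = RtoC 0) -> (forall k, Cmod (u k) <= B * q ^ k) ->
  Cmod l <= B * (q ^ K / (1 - q)).
Proof.
  intros Hu Hq Hz Hb.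
  apply (is_series_Cmod_le _ _ _ _ Hu (is_series_scal_l (K := R_AbsRing) B _ _ (is_series_geom_tail q K Hq))).
  intros k. change (Cmod (u k) <= B * (if (k <? K)%nat then 0 else q ^ k)).
  destruct (Nat.ltb_spec k K) as [Hk|Hk]; [|apply Hb].
  rewrite Hz, Cmod_0 by exact Hk. specialize (Hb k). pose proof (Cmod_ge_0 (u k)). lra.
Qed.

(** * Power series on the unit disk *)

Lemma pow_le_pow_of_le_1 x m n : 0 <= x <= 1 -> (m <= n)%nat -> x ^ n <= x ^ m.
Proof.
  intros Hx Hmn. replace n with (m + (n - m))%nat by lia. rewrite pow_add.
  rewrite <- (Rmult_1_r (x ^ m)) at 2. apply Rmult_le_compat_l; [apply pow_le; lra|].
  rewrite <- (pow1 (n - m)). apply pow_incr. lra.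
Qed.

Lemma INR_mul_pow_le a b n : 0 <= a < b -> INR n * a ^ n <= a / (b - a) * b ^ n.
Proof.
  intros Hab. destruct (Req_dec a 0) as [->|Ha].
  - destruct n; simpl; unfold Rdiv; lra.
  - set (t := (b - a) / a).
    assert (Ht : 0 < t) by (unfold t; apply Rdiv_lt_0_compat; lra).
    replace b with (a * (1 + t)) by (unfold t; field; lra).
    replace (a / (a * (1 + t) - a)) with (/ t) by (unfold t; field; lra).
    rewrite Rpow_mult_distr.
    assert (Hbern : 1 + INR n * t <= (1 + t) ^ n) by (apply Rle_pow_lin; lra).
    assert (0 < a ^ n) by (apply pow_lt; lra).
    apply Rmult_le_reg_l with t; [exact Ht|].
    replace (t * (/ t * (a ^ n * (1 + t) ^ n))) with (a ^ n * (1 + t) ^ n) by (field; lra).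
    pose proof (pos_INR n). nra.
Qed.

Definition pterm (c : nat -> C) (z : C) (n : nat) : C := (Cpow z n * c n)%C.

Lemma pow_n_Cpow (z : C) n : @pow_n C_Ring z n = Cpow z n.
Proof. induction n as [|n IH]; simpl; [|rewrite IH]; reflexivity. Qed.

Lemma is_pseries_pterm c z l : is_pseries c z l <-> is_series (pterm c z) l.
Proof.
  unfold is_pseries, pterm. split; apply is_series_ext; intros n; rewrite <- pow_n_Cpow; reflexivity.
Qed.

Lemma Cmod_pterm c z n : Cmod (pterm c z n) = Cmod (c n) * Cmod z ^ n.
Proof. unfold pterm. rewrite Cmod_mult, Cmod_pow. ring. Qed.

Lemma csum_unique c z l : is_pseries c z l -> csum c z = l.
Proof.
  intros H. unfold csum.
  pose proof (epsilon_spec (inhabits (RtoC 0)) (fun l => is_pseries c z l) (ex_intro _ l H)) as Hc.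
  apply is_pseries_pterm in H, Hc. exact (is_series_C_unique _ _ _ Hc H).
Qed.

Definition unit_radius (c : nat -> C) : Prop :=
  forall r, 0 <= r < 1 -> exists M, forall n, Cmod (c n) * r ^ n <= M.

Lemma unit_radius_geom_bound c r : unit_radius c -> 0 <= r < 1 ->
  exists M q, 0 <= M /\ 0 <= q < 1 /\ forall n, Cmod (c n) * r ^ n <= M * q ^ n.
Proof.
  intros Hc Hr. set (r1 := (1 + r) / 2).
  destruct (Hc r1) as [M HM]; [unfold r1; lra|].
  exists M, (r / r1). split; [|split].
  - specialize (HM 0%nat). simpl in HM. pose proof (Cmod_ge_0 (c 0%nat)). lra.
  - split; [apply Rmult_le_pos; [lra|left; apply Rinv_0_lt_compat; unfold r1; lra]|].
    apply Rmult_lt_reg_r with r1; [unfold r1; lra|].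
    unfold Rdiv. rewrite Rmult_assoc, Rinv_l by (unfold r1; lra). unfold r1. lra.
  - intros n. replace (r ^ n) with ((r / r1) ^ n * r1 ^ n)
      by (rewrite <- Rpow_mult_distr; f_equal; field; unfold r1; lra).
    assert (0 <= (r / r1) ^ n).
    { apply pow_le, Rmult_le_pos; [lra|left; apply Rinv_0_lt_compat; unfold r1; lra]. }
    specialize (HM n). rewrite (Rmult_comm M), <- Rmult_assoc, (Rmult_comm (Cmod (c n))), Rmult_assoc.
    apply Rmult_le_compat_l; assumption.
Qed.

Lemma is_pseries_csum c z : unit_radius c -> Cmod z < 1 -> is_pseries c z (csum c z).
Proof.
  intros Hc Hz.
  destruct (unit_radius_geom_bound c (Cmod z) Hc (conj (Cmod_ge_0 z) Hz)) as (M & q & HM & Hq & Hb).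
  assert (Hex : ex_series (pterm c z)).
  { apply (ex_series_le (V := C_CompleteNormedModule)) with (fun n => M * q ^ n).
    - intros n. change (Cmod (pterm c z n) <= M * q ^ n). rewrite Cmod_pterm. apply Hb.
    - exists (M * / (1 - q)).
      apply (is_series_scal_l (K := R_AbsRing) (V := R_NormedModule) M (fun n => q ^ n)).
      apply is_series_geom. rewrite Rabs_pos_eq; lra. }
  destruct Hex as [l Hl]. apply is_pseries_pterm in Hl. rewrite (csum_unique _ _ _ Hl). exact Hl.
Qed.

Lemma unit_radius_of_is_pseries c :
  (forall z, Cmod z < 1 -> exists l, is_pseries c z l) -> unit_radius c.
Proof.
  intros H r Hr.
  destruct (H (RtoC r)) as [l Hl]; [rewrite Cmod_R, Rabs_pos_eq; lra|].
  apply is_pseries_pterm in Hl.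
  destruct (filterlim_bounded (V := C_NormedModule) (sum_n (pterm c r))) as [M HM];
    [exists l; exact Hl|].
  assert (HS : forall n, Cmod (sum_n (pterm c r) n) <= M) by exact HM.
  exists (2 * M). intros n.
  replace (Cmod (c n) * r ^ n) with (Cmod (pterm c r n))
    by (rewrite Cmod_pterm, Cmod_R, Rabs_pos_eq by lra; reflexivity).
  pose proof (HS 0%nat) as H0. rewrite sum_O in H0.
  assert (HM0 : 0 <= M) by (pose proof (Cmod_ge_0 (pterm c r 0)); lra).
  destruct n as [|n]; [lra|].
  pose proof (HS (S n)) as H1. rewrite sum_Sn in H1.
  replace (pterm c r (S n)) with (plus (sum_n (pterm c r) n) (pterm c r (S n)) - sum_n (pterm c r) n)%C
    by (unfold plus; simpl; ring).
  unfold Cminus. eapply Rle_trans; [apply Cmod_triangle|]. rewrite Cmod_opp.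
  specialize (HS n). lra.
Qed.

Lemma unit_radius_le c d B : 0 <= B -> unit_radius c ->
  (forall n, Cmod (d n) <= Cmod (c n) + B) -> unit_radius d.
Proof.
  intros HB Hc H r Hr. destruct (Hc r Hr) as [M HM]. exists (M + B). intros n.
  assert (r ^ n <= 1) by (rewrite <- (pow1 n); apply pow_incr; lra).
  assert (0 <= r ^ n) by (apply pow_le; lra).
  specialize (H n). specialize (HM n). nra.
Qed.

Lemma unit_radius_INR_mult c : unit_radius c -> unit_radius (fun n => INR n * c n)%C.
Proof.
  intros Hc r Hr. set (r1 := (1 + r) / 2).
  destruct (Hc r1) as [M HM]; [unfold r1; lra|].
  set (K := r / (r1 - r)).
  assert (HK : 0 <= K) by (unfold K; apply Rmult_le_pos; [lra|left; apply Rinv_0_lt_compat; unfold r1; lra]).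
  exists (K * M). intros n.
  rewrite Cmod_mult, Cmod_R, Rabs_pos_eq by apply pos_INR.
  pose proof (INR_mul_pow_le r r1 n ltac:(unfold r1; lra)) as Hlin. fold K in Hlin.
  pose proof (Cmod_ge_0 (c n)). specialize (HM n).
  apply Rle_trans with (Cmod (c n) * (K * r1 ^ n)); [rewrite (Rmult_comm (INR n)), Rmult_assoc;
    apply Rmult_le_compat_l; assumption|].
  replace (Cmod (c n) * (K * r1 ^ n)) with (K * (Cmod (c n) * r1 ^ n)) by ring.
  apply Rmult_le_compat_l; assumption.
Qed.

Lemma unit_radius_pow_INR_mult c d : unit_radius c -> unit_radius (fun n => INR n ^ d * c n)%C.
Proof.
  intros Hc. induction d as [|d IH].
  - apply (unit_radius_le c _ 0); [lra|exact Hc|].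
    intros n. simpl. rewrite Cmod_mult, Cmod_1. lra.
  - apply (unit_radius_le _ _ 0 (Rle_refl 0) (unit_radius_INR_mult _ IH)).
    intros n. right. rewrite Rplus_0_r, Cpow_S. f_equal. ring.
Qed.

Lemma unit_radius_decr_1 c : unit_radius c -> unit_radius (PS_decr_1 c).
Proof.
  intros Hc r Hr. set (r1 := (1 + r) / 2).
  destruct (Hc r1) as [M HM]; [unfold r1; lra|].
  exists (M / r1). intros n. unfold PS_decr_1.
  assert (Hr1 : 0 < r1) by (unfold r1; lra).
  apply Rle_trans with (Cmod (c (S n)) * r1 ^ n).
  - apply Rmult_le_compat_l; [apply Cmod_ge_0|apply pow_incr; unfold r1; lra].
  - apply Rmult_le_reg_r with r1; [exact Hr1|].
    replace (M / r1 * r1) with M by (field; lra).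
    rewrite Rmult_assoc. rewrite (Rmult_comm (r1 ^ n)). apply (HM (S n)).
Qed.

Definition PS_Cderive (c : nat -> C) (n : nat) : C := (INR (S n) * c (S n))%C.

Lemma unit_radius_PS_Cderive c : unit_radius c -> unit_radius (PS_Cderive c).
Proof.
  intros Hc. apply (unit_radius_le _ _ 0 (Rle_refl 0) (unit_radius_decr_1 _ (unit_radius_INR_mult c Hc))).
  intros n. rewrite Rplus_0_r. right. reflexivity.
Qed.

(** * Orders of vanishing at 0 *)

Definition bigO_at0 (n : nat) (F : C -> C) : Prop :=
  exists K d, 0 < d /\ forall z, Cmod z <= d -> Cmod (F z) <= K * Cmod z ^ n.

Lemma bigO_at0_ext_near n F G :
  (exists d, 0 < d /\ forall z, Cmod z <= d -> F z = G z) -> bigO_at0 n F -> bigO_at0 n G.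
Proof.
  intros (d1 & Hd1 & E) (K & d & Hd & HF). exists K, (Rmin d d1).
  split; [apply Rmin_pos; assumption|]. intros z Hz.
  rewrite <- E by (eapply Rle_trans; [exact Hz|apply Rmin_r]).
  apply HF. eapply Rle_trans; [exact Hz|apply Rmin_l].
Qed.

Lemma bigO_at0_ext n F G : (forall z, F z = G z) -> bigO_at0 n F -> bigO_at0 n G.
Proof. intros E. apply bigO_at0_ext_near. exists 1. split; [lra|intros; apply E]. Qed.

Lemma bigO_at0_zero n : bigO_at0 n (fun _ => RtoC 0).
Proof. exists 0, 1. split; [lra|]. intros z _. rewrite Cmod_0. lra. Qed.

Lemma bigO_at0_Cpow n : bigO_at0 n (fun z => Cpow z n).
Proof. exists 1, 1. split; [lra|]. intros z _. rewrite Cmod_pow. lra. Qed.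

Lemma bigO_at0_plus n F G : bigO_at0 n F -> bigO_at0 n G -> bigO_at0 n (fun z => F z + G z)%C.
Proof.
  intros (K1 & d1 & Hd1 & H1) (K2 & d2 & Hd2 & H2). exists (K1 + K2), (Rmin d1 d2).
  split; [apply Rmin_pos; assumption|]. intros z Hz.
  specialize (H1 z (Rle_trans _ _ _ Hz (Rmin_l _ _))). specialize (H2 z (Rle_trans _ _ _ Hz (Rmin_r _ _))).
  eapply Rle_trans; [apply Cmod_triangle|]. lra.
Qed.

Lemma bigO_at0_scal n (c : C) F : bigO_at0 n F -> bigO_at0 n (fun z => c * F z)%C.
Proof.
  intros (K & d & Hd & H). exists (Cmod c * K), d. split; [exact Hd|]. intros z Hz.
  rewrite Cmod_mult, Rmult_assoc. apply Rmult_le_compat_l; [apply Cmod_ge_0|auto].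
Qed.

Lemma bigO_at0_minus n F G : bigO_at0 n F -> bigO_at0 n G -> bigO_at0 n (fun z => F z - G z)%C.
Proof.
  intros HF HG. apply (bigO_at0_ext n (fun z => F z + (-1) * G z)%C); [intros; ring|].
  exact (bigO_at0_plus _ _ _ HF (bigO_at0_scal _ _ _ HG)).
Qed.

Lemma bigO_at0_mult n1 n2 F G :
  bigO_at0 n1 F -> bigO_at0 n2 G -> bigO_at0 (n1 + n2) (fun z => F z * G z)%C.
Proof.
  intros (K1 & d1 & Hd1 & H1) (K2 & d2 & Hd2 & H2). exists (K1 * K2), (Rmin d1 d2).
  split; [apply Rmin_pos; assumption|]. intros z Hz.
  specialize (H1 z (Rle_trans _ _ _ Hz (Rmin_l _ _))). specialize (H2 z (Rle_trans _ _ _ Hz (Rmin_r _ _))).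
  rewrite Cmod_mult, pow_add.
  replace (K1 * K2 * (Cmod z ^ n1 * Cmod z ^ n2)) with ((K1 * Cmod z ^ n1) * (K2 * Cmod z ^ n2)) by ring.
  apply Rmult_le_compat; auto using Cmod_ge_0.
Qed.

Lemma bigO_at0_weaken n1 n2 F : (n1 <= n2)%nat -> bigO_at0 n2 F -> bigO_at0 n1 F.
Proof.
  intros Hn (K & d & Hd & H). exists (Rabs K), (Rmin d 1).
  split; [apply Rmin_pos; lra|]. intros z Hz.
  specialize (H z (Rle_trans _ _ _ Hz (Rmin_l _ _))).
  assert (Hz1 : 0 <= Cmod z <= 1) by (split; [apply Cmod_ge_0|eapply Rle_trans; [exact Hz|apply Rmin_r]]).
  pose proof (pow_le_pow_of_le_1 _ _ _ Hz1 Hn).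
  assert (K * Cmod z ^ n2 <= Rabs K * Cmod z ^ n2) by (apply Rmult_le_compat_r; [apply pow_le; lra|apply Rle_abs]).
  pose proof (Rabs_pos K). nra.
Qed.

Lemma bigO_at0_small n F : bigO_at0 (S n) F ->
  forall e, 0 < e -> exists d, 0 < d /\ forall z, Cmod z <= d -> Cmod (F z) <= e.
Proof.
  intros (K & d & Hd & H) e He.
  set (t := e / (Rabs K + 1)).
  assert (Ht : 0 < t) by (unfold t; apply Rdiv_lt_0_compat; [lra|pose proof (Rabs_pos K); lra]).
  exists (Rmin d (Rmin 1 t)). split; [repeat apply Rmin_pos; lra|]. intros z Hz.
  assert (Hzd : Cmod z <= d) by (eapply Rle_trans; [exact Hz|apply Rmin_l]).
  assert (Hz1 : Cmod z <= 1) by (eapply Rle_trans; [exact Hz|]; eapply Rle_trans; [apply Rmin_r|apply Rmin_l]).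
  assert (Hzt : Cmod z <= t) by (eapply Rle_trans; [exact Hz|]; eapply Rle_trans; [apply Rmin_r|apply Rmin_r]).
  pose proof (Cmod_ge_0 z) as Hz0.
  assert (Hpow : Cmod z ^ S n <= Cmod z) by (rewrite <- (pow_1 (Cmod z)) at 2; apply pow_le_pow_of_le_1; [lra|lia]).
  eapply Rle_trans; [apply (H z Hzd)|].
  apply Rle_trans with (Rabs K * Cmod z).
  - apply Rle_trans with (Rabs K * Cmod z ^ S n).
    + apply Rmult_le_compat_r; [apply pow_le; lra|apply Rle_abs].
    + apply Rmult_le_compat_l; [apply Rabs_pos|exact Hpow].
  - apply Rle_trans with ((Rabs K + 1) * t).
    + assert (Rabs K * Cmod z <= Rabs K * t) by (apply Rmult_le_compat_l; [apply Rabs_pos|exact Hzt]).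
      lra.
    + unfold t. right. field. pose proof (Rabs_pos K). lra.
Qed.

Lemma bigO_at0_monomial_coeff i (c : C) : bigO_at0 (S i) (fun z => c * Cpow z i)%C -> c = RtoC 0.
Proof.
  intros (K & d & Hd & H).
  destruct (Req_dec (Cmod c) 0) as [E|E]; [apply Cmod_eq_0; exact E|exfalso].
  pose proof (Cmod_ge_0 c) as Hc0.
  set (t := Rmin d (Cmod c / (2 * (Rabs K + 1)))).
  assert (Ht : 0 < t) by (apply Rmin_pos; [lra|apply Rdiv_lt_0_compat; pose proof (Rabs_pos K); lra]).
  specialize (H (RtoC t)). rewrite Cmod_mult, Cmod_pow, Cmod_R, Rabs_pos_eq in H by lra.
  specialize (H (Rmin_l _ _)). simpl pow in H.
  assert (Hti : 0 < t ^ i) by (apply pow_lt; lra).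
  assert (Hct : Cmod c <= Rabs K * t).
  { apply Rmult_le_reg_r with (t ^ i); [exact Hti|].
    assert (K * (t * t ^ i) <= Rabs K * (t * t ^ i))
      by (apply Rmult_le_compat_r; [apply Rmult_le_pos; lra|apply Rle_abs]).
    lra. }
  assert (Rabs K * t <= Cmod c / 2).
  { apply Rle_trans with (Rabs K * (Cmod c / (2 * (Rabs K + 1)))).
    - apply Rmult_le_compat_l; [apply Rabs_pos|apply Rmin_r].
    - apply Rmult_le_reg_r with (2 * (Rabs K + 1)); [pose proof (Rabs_pos K); lra|].
      replace (Rabs K * (Cmod c / (2 * (Rabs K + 1))) * (2 * (Rabs K + 1))) with (Rabs K * Cmod c)
        by (field; pose proof (Rabs_pos K); lra).
      replace (Cmod c / 2 * (2 * (Rabs K + 1))) with (Rabs K * Cmod c + Cmod c) by field. lra. }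
  lra.
Qed.

Definition monom (k : nat) (c : C) (n : nat) : C := if (n =? k)%nat then c else RtoC 0.

Lemma fsum_monom k c N : fsum (monom k c) N = if (k <? N)%nat then c else RtoC 0.
Proof.
  induction N as [|N IH]; [reflexivity|]. simpl fsum. rewrite IH. unfold monom.
  destruct (Nat.ltb_spec k N), (Nat.ltb_spec k (S N)), (Nat.eqb_spec N k); subst; try lia; ring.
Qed.

Lemma is_series_monom k c : is_series (monom k c) c.
Proof.
  pose proof (is_series_fsum (monom k c) (S k)) as H. rewrite fsum_monom in H.
  destruct (Nat.ltb_spec k (S k)); [|lia]. apply H.
  intros n Hn. unfold monom. destruct (Nat.eqb_spec n k); [lia|reflexivity].
Qed.

Lemma fsum_pterm_monom k c z N :
  fsum (pterm (monom k c) z) N = if (k <? N)%nat then (c * Cpow z k)%C else RtoC 0.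
Proof.
  rewrite <- fsum_monom. apply fsum_ext. intros n _. unfold pterm, monom.
  destruct (Nat.eqb_spec n k); subst; ring.
Qed.

Lemma fsum_pterm_plus p q z N :
  fsum (pterm (fun n => p n + q n)%C z) N = (fsum (pterm p z) N + fsum (pterm q z) N)%C.
Proof. induction N as [|N IH]; simpl; [ring|rewrite IH; unfold pterm; ring]. Qed.

Lemma fsum_pterm_minus p q z N :
  fsum (pterm (fun n => p n - q n)%C z) N = (fsum (pterm p z) N - fsum (pterm q z) N)%C.
Proof. induction N as [|N IH]; simpl; [ring|rewrite IH; unfold pterm; ring]. Qed.

Lemma fsum_pterm_ext p q z N :
  (forall n, (n < N)%nat -> p n = q n) -> fsum (pterm p z) N = fsum (pterm q z) N.
Proof. intros H. apply fsum_ext. intros n Hn. unfold pterm. rewrite H by exact Hn. reflexivity. Qed.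

Lemma fsum_pterm_bigO p i N :
  (forall n, (n < i)%nat -> p n = RtoC 0) -> bigO_at0 i (fun z => fsum (pterm p z) N).
Proof.
  intros Hp. induction N as [|N IH]; [apply bigO_at0_zero|]. apply bigO_at0_plus; [exact IH|].
  destruct (Nat.ltb_spec N i) as [HN|HN].
  - apply (bigO_at0_ext _ (fun _ => RtoC 0)); [intros z; unfold pterm; rewrite Hp by exact HN; ring|].
    apply bigO_at0_zero.
  - apply (bigO_at0_weaken _ _ _ HN). apply (bigO_at0_ext _ (fun z => p N * Cpow z N)%C).
    + intros z. unfold pterm. ring.
    + apply bigO_at0_scal, bigO_at0_Cpow.
Qed.

Lemma coeffs_eq0_of_bigO p N :
  bigO_at0 N (fun z => fsum (pterm p z) N) -> forall i, (i < N)%nat -> p i = RtoC 0.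
Proof.
  intros HN i. induction i as [i IH] using (well_founded_induction Wf_nat.lt_wf). intros Hi.
  set (p' := fun n => (p n - monom i (p i) n)%C).
  assert (Hp' : bigO_at0 (S i) (fun z => fsum (pterm p' z) N)).
  { apply fsum_pterm_bigO. intros n Hn. unfold p', monom.
    destruct (Nat.eqb_spec n i); [subst; ring|rewrite IH by lia; ring]. }
  apply (bigO_at0_monomial_coeff i).
  apply (bigO_at0_ext _ (fun z => fsum (pterm p z) N - fsum (pterm p' z) N)%C).
  - intros z. unfold p'. rewrite fsum_pterm_minus, fsum_pterm_monom.
    destruct (Nat.ltb_spec i N); [ring|lia].
  - exact (bigO_at0_minus _ _ _ (bigO_at0_weaken _ _ _ Hi HN) Hp').
Qed.

Lemma is_series_truncate (u : nat -> C) l N : is_series u l ->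
  is_series (fun n => if (n <? N)%nat then RtoC 0 else u n) (l - fsum u N)%C.
Proof.
  intros H.
  assert (Hhead : is_series (fun n => if (n <? N)%nat then u n else RtoC 0) (fsum u N)).
  { replace (fsum u N) with (fsum (fun n => if (n <? N)%nat then u n else RtoC 0) N).
    - apply is_series_fsum. intros k Hk. destruct (Nat.ltb_spec k N); [lia|reflexivity].
    - apply fsum_ext. intros k Hk. destruct (Nat.ltb_spec k N); [reflexivity|lia]. }
  eapply is_series_ext; [|exact (is_series_minus _ _ _ _ H Hhead)].
  intros n. unfold plus, opp; simpl. destruct (n <? N)%nat; ring.
Qed.

Lemma csum_sub_fsum_bigO c N : unit_radius c ->
  bigO_at0 N (fun z => csum c z - fsum (pterm c z) N)%C.
Proof.
  intros Hc. destruct (Hc (3 / 4)) as [M HM]; [lra|].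
  assert (HM0 : 0 <= M) by (specialize (HM 0%nat); simpl in HM; pose proof (Cmod_ge_0 (c 0%nat)); lra).
  exists (3 * M * (4 / 3) ^ N), (1 / 2). split; [lra|]. intros z Hz.
  set (q := Cmod z * (4 / 3)).
  assert (Hq : 0 <= q <= 2 / 3) by (unfold q; pose proof (Cmod_ge_0 z); lra).
  pose proof (proj1 (is_pseries_pterm _ _ _) (is_pseries_csum c z Hc ltac:(lra))) as Hs.
  eapply Rle_trans.
  - apply (Cmod_series_le_geom_tail _ _ N M q (is_series_truncate _ _ N Hs) ltac:(lra)).
    + intros k Hk. destruct (Nat.ltb_spec k N); [reflexivity|lia].
    + intros k. destruct (k <? N)%nat; [rewrite Cmod_0; apply Rmult_le_pos; [lra|apply pow_le; lra]|].
      rewrite Cmod_pterm.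
      replace (Cmod z ^ k) with ((3 / 4) ^ k * q ^ k) by (unfold q; rewrite <- Rpow_mult_distr; f_equal; field).
      rewrite <- Rmult_assoc. apply Rmult_le_compat_r; [apply pow_le; lra|apply HM].
  - unfold q. rewrite Rpow_mult_distr.
    assert (0 <= Cmod z ^ N * (4 / 3) ^ N) by (apply Rmult_le_pos; apply pow_le; [apply Cmod_ge_0|lra]).
    apply Rle_trans with (M * (Cmod z ^ N * (4 / 3) ^ N) * 3); [|right; ring].
    unfold Rdiv at 1. rewrite <- Rmult_assoc. apply Rmult_le_compat_l; [apply Rmult_le_pos; assumption|].
    apply Rmult_le_reg_r with (1 - Cmod z * (4 / 3)); [lra|].
    rewrite Rinv_l by lra. lra.
Qed.

Lemma csum_bounded_at0 c : unit_radius c -> bigO_at0 0 (csum c).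
Proof.
  intros Hc. eapply bigO_at0_ext; [|exact (csum_sub_fsum_bigO c 0 Hc)].
  intros z. simpl. ring.
Qed.

Lemma coeffs_eq_of_bigO c t N : unit_radius c ->
  bigO_at0 N (fun z => csum c z - fsum (pterm t z) N)%C -> forall i, (i < N)%nat -> c i = t i.
Proof.
  intros Hc H i Hi.
  assert (Hd : (c i - t i)%C = RtoC 0).
  { refine (coeffs_eq0_of_bigO (fun n => c n - t n)%C N _ i Hi).
    apply (bigO_at0_ext _ (fun z => (csum c z - fsum (pterm t z) N) - (csum c z - fsum (pterm c z) N))%C).
    - intros z. rewrite fsum_pterm_minus. ring.
    - exact (bigO_at0_minus _ _ _ H (csum_sub_fsum_bigO c N Hc)). }
  replace (c i) with ((c i - t i) + t i)%C by ring. rewrite Hd. ring.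
Qed.

Lemma coeffs_unique c d : unit_radius c -> unit_radius d ->
  (forall z, Cmod z < 1 -> csum c z = csum d z) -> c = d.
Proof.
  intros Hc Hd E. apply functional_extensionality. intros n.
  apply (coeffs_eq_of_bigO c d (S n) Hc); [|lia].
  apply (bigO_at0_ext_near _ (fun z => csum d z - fsum (pterm d z) (S n))%C).
  - exists (1 / 2). split; [lra|]. intros z Hz. rewrite E by lra. reflexivity.
  - exact (csum_sub_fsum_bigO d (S n) Hd).
Qed.

Lemma coeffs_of_eq (h : C -> C) c :
  (forall z, in_U z -> is_pseries c z (h z)) -> coeffs_of h = c.
Proof.
  intros H.
  pose proof (epsilon_spec (inhabits (fun _ : nat => RtoC 0))
    (fun c' : nat -> C => forall z, in_U z -> is_pseries c' z (h z)) (ex_intro _ c H)) as Hh.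
  fold (coeffs_of h) in Hh.
  apply coeffs_unique.
  - apply unit_radius_of_is_pseries. intros z Hz. exists (h z). exact (Hh z Hz).
  - apply unit_radius_of_is_pseries. intros z Hz. exists (h z). exact (H z Hz).
  - intros z Hz. rewrite (csum_unique _ _ _ (Hh z Hz)), (csum_unique _ _ _ (H z Hz)). reflexivity.
Qed.

(** * Complex derivative of a power series *)

Lemma Cmod_Cpow_sub_le z h rho l : Cmod z <= rho -> Cmod (z + h) <= rho ->
  rho * Cmod (Cpow (z + h) l - Cpow z l) <= INR l * Cmod h * rho ^ l.
Proof.
  intros Hz Hzh. pose proof (Cmod_ge_0 z). pose proof (Cmod_ge_0 h).
  induction l as [|l IH].
  - simpl. replace (1 - 1)%C with (RtoC 0) by ring. rewrite Cmod_0. lra.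
  - replace (Cpow (z + h) (S l) - Cpow z (S l))%C
      with ((z + h) * (Cpow (z + h) l - Cpow z l) + h * Cpow z l)%C by (simpl; ring).
    set (D := Cmod (Cpow (z + h) l - Cpow z l)) in *.
    assert (HD : 0 <= D) by apply Cmod_ge_0.
    assert (Hzl : Cmod z ^ l <= rho ^ l) by (apply pow_incr; lra).
    assert (Htri : Cmod ((z + h) * (Cpow (z + h) l - Cpow z l) + h * Cpow z l)%C
                   <= Cmod (z + h) * D + Cmod h * Cmod z ^ l).
    { eapply Rle_trans; [apply Cmod_triangle|]. rewrite !Cmod_mult, Cmod_pow. fold D. lra. }
    assert (rho * (Cmod (z + h) * D) <= rho * (INR l * Cmod h * rho ^ l)).
    { apply Rmult_le_compat_l; [lra|]. apply Rle_trans with (rho * D); [|exact IH].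
      apply Rmult_le_compat_r; assumption. }
    assert (rho * (Cmod h * Cmod z ^ l) <= rho * (Cmod h * rho ^ l)).
    { apply Rmult_le_compat_l; [lra|]. apply Rmult_le_compat_l; assumption. }
    rewrite S_INR. simpl pow.
    apply Rle_trans with (rho * (Cmod (z + h) * D + Cmod h * Cmod z ^ l));
      [apply Rmult_le_compat_l; [lra|exact Htri]|lra].
Qed.

(** For [l = 0] the [pred] is harmless: that term is multiplied by [INR 0 = 0]. *)
Definition pow_taylor_rem (z h : C) (l : nat) : C :=
  (Cpow (z + h) l - Cpow z l - INR l * h * Cpow z (pred l))%C.

Lemma pow_taylor_rem_S z h l :
  pow_taylor_rem z h (S l) = (z * pow_taylor_rem z h l + h * (Cpow (z + h) l - Cpow z l))%C.
Proof.
  unfold pow_taylor_rem. destruct l as [|l]; simpl pred; rewrite !S_INR, !RtoC_plus; simpl; ring.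
Qed.

Lemma Cmod_pow_taylor_rem_le z h rho l : Cmod z <= rho -> Cmod (z + h) <= rho ->
  rho ^ 2 * Cmod (pow_taylor_rem z h l) <= INR l ^ 2 * Cmod h ^ 2 * rho ^ l.
Proof.
  intros Hz Hzh. pose proof (Cmod_ge_0 z). pose proof (Cmod_ge_0 h).
  induction l as [|l IH].
  - unfold pow_taylor_rem. simpl. replace (1 - 1 - 0 * h * 1)%C with (RtoC 0) by ring.
    rewrite Cmod_0. lra.
  - rewrite pow_taylor_rem_S.
    pose proof (Cmod_Cpow_sub_le z h rho l Hz Hzh) as Hsub.
    set (R := Cmod (pow_taylor_rem z h l)) in *. set (D := Cmod (Cpow (z + h) l - Cpow z l)) in *.
    assert (HR : 0 <= R) by apply Cmod_ge_0. assert (HD : 0 <= D) by apply Cmod_ge_0.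
    assert (Hrl : 0 <= rho ^ l) by (apply pow_le; lra).
    assert (Htri : Cmod (z * pow_taylor_rem z h l + h * (Cpow (z + h) l - Cpow z l))%C
                   <= Cmod z * R + Cmod h * D).
    { eapply Rle_trans; [apply Cmod_triangle|]. rewrite !Cmod_mult. fold R D. lra. }
    assert (H1 : rho ^ 2 * (Cmod z * R) <= rho * (INR l ^ 2 * Cmod h ^ 2 * rho ^ l)).
    { replace (rho ^ 2 * (Cmod z * R)) with (Cmod z * (rho ^ 2 * R)) by ring.
      apply Rmult_le_compat; try assumption. apply Rmult_le_pos; [apply pow_le; lra|exact HR]. }
    assert (H2 : rho ^ 2 * (Cmod h * D) <= rho * Cmod h * (INR l * Cmod h * rho ^ l)).
    { replace (rho ^ 2 * (Cmod h * D)) with (rho * Cmod h * (rho * D)) by ring.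
      apply Rmult_le_compat_l; [apply Rmult_le_pos; lra|exact Hsub]. }
    assert (H3 : 0 <= (INR l + 1) * (Cmod h ^ 2 * (rho * rho ^ l))).
    { pose proof (pos_INR l). apply Rmult_le_pos; [lra|].
      apply Rmult_le_pos; [apply pow_le; lra|apply Rmult_le_pos; lra]. }
    apply Rle_trans with (rho ^ 2 * (Cmod z * R + Cmod h * D));
      [apply Rmult_le_compat_l; [apply pow_le; lra|exact Htri]|].
    rewrite S_INR. simpl pow. simpl pow in H1, H2. nra.
Qed.

Lemma is_series_csum_taylor_rem c z h : unit_radius c -> Cmod z < 1 -> Cmod (z + h) < 1 ->
  is_series (fun l => c l * pow_taylor_rem z h l)%C
    (csum c (z + h) - csum c z - h * csum (PS_Cderive c) z)%C.
Proof.
  intros Hc Hz Hzh.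
  pose proof (proj1 (is_pseries_pterm _ _ _) (is_pseries_csum c (z + h) Hc Hzh)) as S1.
  pose proof (proj1 (is_pseries_pterm _ _ _) (is_pseries_csum c z Hc Hz)) as S2.
  pose proof (proj1 (is_pseries_pterm _ _ _)
    (is_pseries_csum _ z (unit_radius_PS_Cderive c Hc) Hz)) as S3.
  assert (S4 : is_series (fun l => INR l * h * Cpow z (pred l) * c l)%C
                 (h * csum (PS_Cderive c) z)%C).
  { apply is_series_decr_1.
    match goal with |- is_series _ ?l => replace l with (h * csum (PS_Cderive c) z)%C
      by (unfold plus, opp; simpl; ring) end.
    eapply is_series_ext; [|exact (is_series_Cmult_l h _ _ S3)].
    intros n. unfold pterm, PS_Cderive; simpl. ring. }
  eapply is_series_ext; [|exact (is_series_minus _ _ _ _ (is_series_minus _ _ _ _ S1 S2) S4)].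
  intros l. unfold plus, opp, pterm, pow_taylor_rem; simpl. ring.
Qed.

Lemma csum_taylor_le c rho : unit_radius c -> 0 < rho < 1 ->
  exists K, 0 <= K /\ forall z h, Cmod z <= rho -> Cmod (z + h) <= rho ->
    Cmod (csum c (z + h) - csum c z - h * csum (PS_Cderive c) z)%C <= K * Cmod h ^ 2.
Proof.
  intros Hc Hrho.
  destruct (unit_radius_geom_bound _ rho (unit_radius_pow_INR_mult c 2 Hc) ltac:(lra))
    as (M & q & HM & Hq & Hb).
  assert (Hrho2 : 0 < rho ^ 2) by (apply pow_lt; lra).
  exists (M / (rho ^ 2 * (1 - q))). split.
  { apply Rmult_le_pos; [exact HM|left; apply Rinv_0_lt_compat, Rmult_lt_0_compat; lra]. }
  intros z h Hz Hzh.
  set (B := Cmod h ^ 2 / rho ^ 2 * M).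
  apply Rle_trans with (B * / (1 - q)); [|right; unfold B; field; lra].
  apply (is_series_Cmod_le _ _ _ _ (is_series_csum_taylor_rem c z h Hc ltac:(lra) ltac:(lra))
    (is_series_scal_l (K := R_AbsRing) (V := R_NormedModule) B _ _
       (is_series_geom q ltac:(rewrite Rabs_pos_eq; lra)))).
  intros l. change (Cmod (c l * pow_taylor_rem z h l)%C <= B * q ^ l).
  pose proof (Cmod_pow_taylor_rem_le z h rho l Hz Hzh) as Hrem.
  specialize (Hb l). rewrite Cmod_mult, Cmod_pow, Cmod_R, Rabs_pos_eq in Hb by apply pos_INR.
  rewrite Cmod_mult. unfold B.
  apply Rle_trans with (Cmod (c l) * (INR l ^ 2 * Cmod h ^ 2 * rho ^ l / rho ^ 2)).
  - apply Rmult_le_compat_l; [apply Cmod_ge_0|].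
    apply Rmult_le_reg_l with (rho ^ 2); [exact Hrho2|].
    replace (rho ^ 2 * (INR l ^ 2 * Cmod h ^ 2 * rho ^ l / rho ^ 2))
      with (INR l ^ 2 * Cmod h ^ 2 * rho ^ l) by (field; lra). exact Hrem.
  - replace (Cmod (c l) * (INR l ^ 2 * Cmod h ^ 2 * rho ^ l / rho ^ 2))
      with (Cmod h ^ 2 / rho ^ 2 * (INR l ^ 2 * Cmod (c l) * rho ^ l)) by (field; lra).
    replace (Cmod h ^ 2 / rho ^ 2 * M * q ^ l) with (Cmod h ^ 2 / rho ^ 2 * (M * q ^ l)) by ring.
    apply Rmult_le_compat_l; [|exact Hb].
    apply Rmult_le_pos; [apply pow_le, Cmod_ge_0|left; apply Rinv_0_lt_compat; exact Hrho2].
Qed.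

Lemma is_derive_csum c z : unit_radius c -> Cmod z < 1 ->
  is_derive (csum c) z (csum (PS_Cderive c) z).
Proof.
  intros Hc Hz. set (rho := (1 + Cmod z) / 2). pose proof (Cmod_ge_0 z).
  destruct (csum_taylor_le c rho Hc) as (K & HK0 & HK); [unfold rho; lra|].
  split; [apply is_linear_scal_l|].
  intros x Hx. apply (is_filter_lim_locally_unique (K := C_AbsRing) (V := AbsRing_NormedModule C_AbsRing)) in Hx.
  subst x. intros eps.
  set (d := Rmin (rho - Cmod z) (eps / (K + 1))).
  assert (Hd : 0 < d) by (apply Rmin_pos; [unfold rho; lra|apply Rdiv_lt_0_compat; [apply cond_pos|lra]]).
  exists (mkposreal d Hd). intros y Hy. change (Cmod (minus y z) < d) in Hy.
  set (h := minus y z) in *. pose proof (Cmod_ge_0 h).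
  assert (Ey : y = (z + h)%C) by (symmetry; apply Cplus_minus_r).
  assert (Hh1 : Cmod h < rho - Cmod z) by (eapply Rlt_le_trans; [exact Hy|apply Rmin_l]).
  assert (Hh2 : (K + 1) * Cmod h <= eps).
  { apply Rle_trans with ((K + 1) * (eps / (K + 1))); [|right; field; lra].
    apply Rmult_le_compat_l; [lra|]. left. eapply Rlt_le_trans; [exact Hy|apply Rmin_r]. }
  change (Cmod (csum c y - csum c z - h * csum (PS_Cderive c) z)%C <= eps * Cmod h).
  rewrite Ey. eapply Rle_trans.
  - apply HK; [unfold rho; lra|]. eapply Rle_trans; [apply Cmod_triangle|lra].
  - simpl pow. nra.
Qed.

Lemma csum_taylor_bigO b u n : unit_radius b -> bigO_at0 (S n) u ->
  bigO_at0 (2 * S n) (fun z => csum b (z + u z) - csum b z - u z * csum (PS_Cderive b) z)%C.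
Proof.
  intros Hb Hu.
  destruct (csum_taylor_le b (1 / 2) Hb ltac:(lra)) as (K & HK0 & HK).
  destruct (bigO_at0_small n u Hu (1 / 4) ltac:(lra)) as (d1 & Hd1 & Hsmall).
  destruct Hu as (Ku & du & Hdu & Hu).
  exists (K * Ku ^ 2), (Rmin (Rmin d1 du) (1 / 4)). split; [repeat apply Rmin_pos; lra|].
  intros z Hz.
  assert (Hz1 : Cmod z <= 1 / 4) by (eapply Rle_trans; [exact Hz|apply Rmin_r]).
  assert (Hzd1 : Cmod z <= d1) by (eapply Rle_trans; [exact Hz|]; eapply Rle_trans; [apply Rmin_l|apply Rmin_l]).
  assert (Hzdu : Cmod z <= du) by (eapply Rle_trans; [exact Hz|]; eapply Rle_trans; [apply Rmin_l|apply Rmin_r]).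
  specialize (Hsmall z Hzd1). specialize (Hu z Hzdu).
  eapply Rle_trans.
  - apply HK; [lra|]. eapply Rle_trans; [apply Cmod_triangle|lra].
  - replace (K * Ku ^ 2 * Cmod z ^ (2 * S n)) with (K * (Ku * Cmod z ^ S n) ^ 2)
      by (rewrite Nat.mul_comm, pow_mult; ring).
    apply Rmult_le_compat_l; [exact HK0|]. apply pow_incr. split; [apply Cmod_ge_0|exact Hu].
Qed.

(** * Carathéodory's lemma *)

Lemma le_of_le_add_geom x B K q : 0 <= q < 1 -> (forall n, x <= B + K * q ^ n) -> x <= B.
Proof.
  intros Hq H.
  assert (Hlim : is_lim_seq (fun n => B + K * q ^ n) (B + K * 0)).
  { apply is_lim_seq_plus'; [apply is_lim_seq_const|].
    apply (is_lim_seq_scal_l _ K 0), is_lim_seq_geom. rewrite Rabs_pos_eq; lra. }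
  pose proof (is_lim_seq_le _ _ x (B + K * 0) H (is_lim_seq_const x) Hlim) as Hle.
  simpl in Hle. lra.
Qed.

Lemma pow_1_sub_ge e k : 0 <= e <= 1 -> 1 - INR k * e <= (1 - e) ^ k.
Proof.
  intros He. induction k as [|k IH]; [simpl; lra|].
  rewrite S_INR. simpl pow. pose proof (pos_INR k). nra.
Qed.

Lemma le_of_forall_pow_le x B k : (1 <= k)%nat ->
  (forall r, 0 <= r < 1 -> x * r ^ k <= B) -> x <= B.
Proof.
  intros Hk H.
  assert (HB : 0 <= B) by (specialize (H 0 ltac:(lra)); rewrite pow_i in H by lia; lra).
  destruct (Rle_or_lt x 0) as [Hx|Hx]; [lra|].
  apply (le_of_le_add_geom x B (x * INR k) (1 / 2)); [lra|]. intros n.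
  assert (Hq : 0 < (1 / 2) ^ S n <= 1 / 2).
  { split; [apply pow_lt; lra|]. rewrite <- (pow_1 (1 / 2)) at 2. apply pow_le_pow_of_le_1; [lra|lia]. }
  specialize (H (1 - (1 / 2) ^ S n) ltac:(lra)).
  pose proof (pow_1_sub_ge ((1 / 2) ^ S n) k ltac:(lra)) as Hbern.
  assert (x * (1 - INR k * (1 / 2) ^ S n) <= x * (1 - (1 / 2) ^ S n) ^ k)
    by (apply Rmult_le_compat_l; lra).
  assert ((1 / 2) ^ S n <= (1 / 2) ^ n) by (apply pow_le_pow_of_le_1; [lra|lia]).
  assert (0 <= x * INR k) by (apply Rmult_le_pos; [lra|apply pos_INR]).
  assert (x * INR k * (1 / 2) ^ S n <= x * INR k * (1 / 2) ^ n) by (apply Rmult_le_compat_l; lra).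
  nra.
Qed.

Definition cis (t : R) : C := (cos t, sin t).

Lemma cis_add a b : (cis a * cis b)%C = cis (a + b).
Proof. unfold cis, Cmult; simpl. rewrite cos_plus, sin_plus. f_equal; ring. Qed.

Lemma cis_0 : cis 0 = RtoC 1.
Proof. unfold cis, RtoC. rewrite cos_0, sin_0. reflexivity. Qed.

Lemma Cmod_cis t : Cmod (cis t) = 1.
Proof.
  unfold Cmod, cis; simpl. pose proof (sin2_cos2 t) as H. unfold Rsqr in H.
  replace (cos t * (cos t * 1) + sin t * (sin t * 1)) with 1 by lra. apply sqrt_1.
Qed.

Lemma Cconj_cis t : Cconj (cis t) = cis (- t).
Proof. unfold Cconj, cis; simpl. rewrite cos_neg, sin_neg. reflexivity. Qed.

Lemma Cpow_cis t n : Cpow (cis t) n = cis (INR n * t).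
Proof.
  induction n as [|n IH]; [simpl; rewrite Rmult_0_l, cis_0; reflexivity|].
  rewrite Cpow_S, IH, cis_add, S_INR. f_equal. ring.
Qed.

Lemma cis_2PI_INR_sub a b : cis (2 * PI * (INR a - INR b)) = RtoC 1.
Proof.
  assert (Hn : forall n, cis (2 * PI * INR n) = RtoC 1).
  { intros n. unfold cis, RtoC.
    replace (2 * PI * INR n) with (0 + 2 * INR n * PI) by ring.
    rewrite cos_period, sin_period, cos_0, sin_0. reflexivity. }
  replace (2 * PI * (INR a - INR b)) with (2 * PI * INR a + - (2 * PI * INR b)) by ring.
  rewrite <- cis_add, <- Cconj_cis, !Hn. apply injective_projections; simpl; ring.
Qed.

Lemma cis_neq_1 x : 0 < Rabs x < 2 * PI -> cis x <> RtoC 1.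
Proof.
  intros Hx E. unfold cis, RtoC in E. injection E as Ec _.
  assert (Hs : sin (x / 2) = 0).
  { replace x with (2 * (x / 2)) in Ec by field. rewrite cos_2a_sin in Ec. nra. }
  pose proof PI_RGT_0. destruct (Rle_or_lt 0 x).
  - rewrite Rabs_pos_eq in Hx by lra. pose proof (sin_gt_0 (x / 2)). lra.
  - rewrite Rabs_left in Hx by lra. pose proof (sin_gt_0 (- (x / 2))). rewrite sin_neg in *. lra.
Qed.

Definition root_angle (N j : nat) : R := 2 * PI * INR j / INR N.

Definition root_sum (N : nat) (s : R) : C := fsum (fun j => cis (root_angle N j * s)) N.

Lemma root_sum_0 N : root_sum N 0 = RtoC (INR N).
Proof.
  unfold root_sum. rewrite (fsum_ext _ (fun _ => RtoC 1)), fsum_const; [ring|].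
  intros j _. rewrite Rmult_0_r. exact cis_0.
Qed.

Lemma Cmod_root_sum_le N s : Cmod (root_sum N s) <= INR N.
Proof.
  replace (INR N) with (Re (fsum (fun _ => RtoC 1) N)) by (rewrite fsum_const; simpl; ring).
  apply Cmod_fsum_le_Re. intros j _. rewrite Cmod_cis. simpl. lra.
Qed.

Lemma fsum_Cpow_geom (w : C) n : (fsum (Cpow w) n * (w - 1))%C = (Cpow w n - 1)%C.
Proof.
  induction n as [|n IH]; simpl fsum; [simpl; ring|].
  rewrite Cmult_plus_distr_r, IH. simpl. ring.
Qed.

Lemma Rabs_angle_diff_bound N a b : (a <> b)%nat -> (a < b + N)%nat -> (b < a + N)%nat ->
  0 < Rabs (2 * PI * (INR a - INR b) / INR N) < 2 * PI.
Proof.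
  intros Hab H1 H2. pose proof PI_RGT_0.
  assert (HN : 0 < INR N) by (apply lt_0_INR; lia).
  assert (Hd : 0 < Rabs (INR a - INR b) < INR N).
  { apply lt_INR in H1, H2. rewrite plus_INR in H1, H2.
    destruct (Nat.lt_ge_cases a b) as [Hlt|Hge].
    - apply lt_INR in Hlt. rewrite Rabs_left by lra. lra.
    - assert (Hlt : (b < a)%nat) by lia. apply lt_INR in Hlt. rewrite Rabs_pos_eq by lra. lra. }
  unfold Rdiv. rewrite !Rabs_mult, (Rabs_pos_eq 2), (Rabs_pos_eq PI), Rabs_inv, (Rabs_pos_eq (INR N))
    by lra.
  split.
  - apply Rmult_lt_0_compat; [nra|apply Rinv_0_lt_compat; lra].
  - apply Rmult_lt_reg_r with (INR N); [lra|].
    rewrite Rmult_assoc, Rinv_l, Rmult_1_r by lra. nra.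
Qed.

(** Orthogonality of the [N]-th roots of unity. *)
Lemma root_sum_eq0 N a b : (a <> b)%nat -> (a < b + N)%nat -> (b < a + N)%nat ->
  root_sum N (INR a - INR b) = RtoC 0.
Proof.
  intros Hab H1 H2.
  assert (HN : 0 < INR N) by (apply lt_0_INR; lia).
  set (x := 2 * PI * (INR a - INR b) / INR N).
  assert (Hw : (cis x - 1)%C <> RtoC 0).
  { intros E. apply (cis_neq_1 x); [exact (Rabs_angle_diff_bound N a b Hab H1 H2)|].
    replace (cis x) with ((cis x - 1) + 1)%C by ring. rewrite E. ring. }
  pose proof (fsum_Cpow_geom (cis x) N) as Hgeom. rewrite Cpow_cis in Hgeom.
  replace (INR N * x) with (2 * PI * (INR a - INR b)) in Hgeom by (unfold x; field; lra).
  rewrite cis_2PI_INR_sub in Hgeom.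
  replace (root_sum N (INR a - INR b)) with (fsum (Cpow (cis x)) N * (cis x - 1) / (cis x - 1))%C.
  - rewrite Hgeom. unfold Cdiv. ring.
  - field_simplify; [|exact Hw]. apply fsum_ext. intros j _.
    rewrite Cpow_cis. f_equal. unfold root_angle, x. field. lra.
Qed.

Definition dft (p : nat -> C) (r : R) (N : nat) (s : R) : C :=
  fsum (fun j => csum p (r * cis (root_angle N j)) * cis (- (root_angle N j * s)))%C N.

Lemma is_series_dft p r N s : unit_radius p -> 0 <= r < 1 ->
  is_series (fun l => p l * r ^ l * root_sum N (INR l - s))%C (dft p r N s).
Proof.
  intros Hp Hr. unfold dft.
  eapply is_series_ext;
    [|apply (is_series_fsum_index (fun j l => pterm p (r * cis (root_angle N j)) l * cis (- (root_angle N j * s)))%C)].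
  - intros l. unfold root_sum. rewrite <- fsum_scal. apply fsum_ext. intros j _.
    unfold pterm. rewrite Cpow_mult_l, Cpow_cis, <- RtoC_pow.
    replace (INR l * root_angle N j) with (root_angle N j * INR l) by ring.
    replace (root_angle N j * (INR l - s)) with (root_angle N j * INR l + - (root_angle N j * s)) by ring.
    rewrite <- cis_add. ring.
  - intros j.
    assert (Hz : Cmod (r * cis (root_angle N j))%C < 1)
      by (rewrite Cmod_mult, Cmod_cis, Cmod_R, Rabs_pos_eq; lra).
    pose proof (proj1 (is_pseries_pterm _ _ _) (is_pseries_csum p _ Hp Hz)) as H.
    exact (is_series_Cmult_r _ _ _ H).
Qed.

Lemma Cplus_Cconj (c : C) : (c + Cconj c)%C = RtoC (2 * Re c).
Proof. destruct c as [x y]. unfold Cconj, RtoC, Cplus; simpl. f_equal; ring. Qed.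

Section Caratheodory.

Variables (p : nat -> C) (beta : R).
Hypothesis Hp : unit_radius p.
Hypothesis Hp0 : p 0%nat = RtoC 1.
Hypothesis Hre : forall z, Cmod z < 1 -> beta < Re (csum p z).

(** The weights [2 (Re p - beta)] on the circle are nonnegative, so the [k]-th Fourier sum of
    [Re p - beta] is dominated by its mean. *)
Lemma dft_Re_bound r N k : 0 <= r < 1 -> (1 <= k)%nat -> (k < N)%nat ->
  Cmod (dft p r N (INR k) + Cconj (dft p r N (- INR k)))%C <= 2 * (Re (dft p r N 0) - INR N * beta).
Proof.
  intros Hr Hk HN.
  set (P := fun j => csum p (r * cis (root_angle N j))%C).
  set (w := fun j => cis (- (root_angle N j * INR k))).
  assert (HP : forall j, beta < Re (P j))
    by (intros j; apply Hre; rewrite Cmod_mult, Cmod_cis, Cmod_R, Rabs_pos_eq; lra).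
  assert (E : (dft p r N (INR k) + Cconj (dft p r N (- INR k)))%C
              = (fsum (fun j => (P j + Cconj (P j) - 2 * beta) * w j)%C N
                 + 2 * beta * root_sum N (INR 0 - INR k))%C).
  { unfold dft, root_sum. rewrite fsum_conj, <- fsum_scal, <- !fsum_plus.
    apply fsum_ext. intros j _. rewrite Cmult_conj, Cconj_cis. unfold P, w.
    replace (- - (root_angle N j * - INR k)) with (- (root_angle N j * INR k)) by ring.
    replace (root_angle N j * (INR 0 - INR k)) with (- (root_angle N j * INR k)) by (simpl; ring).
    ring. }
  assert (E0 : dft p r N 0 = fsum P N).
  { apply fsum_ext. intros j _. rewrite Rmult_0_r, Ropp_0, cis_0. unfold P. ring. }
  rewrite E, root_sum_eq0, E0 by lia. rewrite Cmult_0_r, Cplus_0_r.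
  replace (2 * (Re (fsum P N) - INR N * beta)) with (Re (fsum (fun j => 2 * (P j - beta))%C N)).
  - apply Cmod_fsum_le_Re. intros j _. specialize (HP j).
    rewrite Cplus_Cconj, Cmod_mult. unfold w. rewrite Cmod_cis, Rmult_1_r, <- RtoC_mult, <- RtoC_minus.
    rewrite Cmod_R, Rabs_pos_eq by lra. right. unfold Re. simpl. ring.
  - rewrite (fsum_ext _ (fun j => 2 * P j + (- 2 * beta))%C) by (intros; ring).
    rewrite fsum_plus, fsum_scal, fsum_const. unfold Re. simpl. ring.
Qed.

Section Approximation.

Variables (r M q : R).
Hypothesis Hr : 0 <= r < 1.
Hypothesis HM : 0 <= M.
Hypothesis Hq : 0 <= q < 1.
Hypothesis Hb : forall l, Cmod (p l) * r ^ l <= M * q ^ l.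

Lemma Cmod_dft_term_le N l s : Cmod (p l * r ^ l * root_sum N s)%C <= INR N * M * q ^ l.
Proof.
  rewrite !Cmod_mult, Cmod_pow, Cmod_R, Rabs_pos_eq by lra.
  pose proof (Cmod_root_sum_le N s). specialize (Hb l).
  assert (0 <= Cmod (p l) * r ^ l) by (apply Rmult_le_pos; [apply Cmod_ge_0|apply pow_le; lra]).
  replace (INR N * M * q ^ l) with (M * q ^ l * INR N) by ring.
  apply Rmult_le_compat; auto using Cmod_ge_0.
Qed.

Lemma Cmod_dft_sub_le N k : (k < N)%nat ->
  Cmod (dft p r N (INR k) - INR N * (p k * r ^ k))%C <= INR N * M * (q ^ N / (1 - q)).
Proof.
  intros HkN.
  apply (Cmod_series_le_geom_tail _ _ N (INR N * M) q
    (is_series_minus _ _ _ _ (is_series_dft p r N (INR k) Hp Hr) (is_series_monom k (INR N * (p k * r ^ k))%C)) Hq).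
  - intros l Hl. unfold plus, opp, monom; simpl. destruct (Nat.eqb_spec l k) as [->|Hlk].
    + rewrite Rminus_diag, root_sum_0. ring.
    + rewrite root_sum_eq0 by lia. ring.
  - intros l. unfold plus, opp, monom; simpl. destruct (Nat.eqb_spec l k) as [->|Hlk].
    + rewrite Rminus_diag, root_sum_0.
      replace (p k * r ^ k * INR N + - (INR N * (p k * r ^ k)))%C with (RtoC 0) by ring.
      rewrite Cmod_0. apply Rmult_le_pos; [apply Rmult_le_pos; [apply pos_INR|exact HM]|apply pow_le; lra].
    + rewrite Copp_0, Cplus_0_r. apply Cmod_dft_term_le.
Qed.

Lemma Cmod_dft_neg_le N k : (1 <= k)%nat -> (k < N)%nat ->
  Cmod (dft p r N (- INR k)) <= INR N * M * (q ^ (N - k) / (1 - q)).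
Proof.
  intros Hk HkN.
  apply (Cmod_series_le_geom_tail _ _ (N - k) (INR N * M) q (is_series_dft p r N (- INR k) Hp Hr) Hq).
  - intros l Hl. replace (INR l - - INR k) with (INR (l + k) - INR 0) by (rewrite plus_INR; simpl; ring).
    rewrite root_sum_eq0 by lia. ring.
  - intros l. apply Cmod_dft_term_le.
Qed.

Lemma caratheodory_approx k N : (1 <= k)%nat -> (k < N)%nat ->
  Cmod (p k) * r ^ k <= 2 * (1 - beta) + 4 * M * (q ^ (N - k) / (1 - q)).
Proof.
  intros Hk HkN.
  assert (HN : 0 < INR N) by (apply lt_0_INR; lia).
  set (T := INR N * M * (q ^ (N - k) / (1 - q))).
  assert (HT : INR N * M * (q ^ N / (1 - q)) <= T).
  { apply Rmult_le_compat_l; [apply Rmult_le_pos; lra|].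
    apply Rmult_le_compat_r; [left; apply Rinv_0_lt_compat; lra|].
    apply pow_le_pow_of_le_1; [lra|lia]. }
  pose proof (Cmod_dft_sub_le N k HkN) as H1.
  pose proof (Cmod_dft_sub_le N 0 ltac:(lia)) as H0.
  rewrite Hp0, Cmult_1_l in H0. simpl in H0. rewrite Cmult_1_r in H0.
  pose proof (Cmod_dft_neg_le N k Hk HkN) as H2. fold T in H2.
  pose proof (dft_Re_bound r N k Hr Hk HkN) as H3.
  assert (HRe : Re (dft p r N 0) <= INR N + T).
  { pose proof (re_le_Cmod (dft p r N 0 - INR N)%C) as Hre0.
    pose proof (Rle_abs (Re (dft p r N 0 - INR N)%C)) as Habs.
    unfold Cminus in Hre0, Habs, H0. rewrite re_plus, re_opp, re_RtoC in Hre0, Habs. lra. }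
  set (A1 := dft p r N (INR k)) in *. set (A2 := dft p r N (- INR k)) in *.
  assert (Hmain : INR N * (Cmod (p k) * r ^ k) <= 2 * INR N * (1 - beta) + 4 * T).
  { replace (INR N * (Cmod (p k) * r ^ k)) with (Cmod (INR N * (p k * r ^ k))%C)
      by (rewrite !Cmod_mult, Cmod_pow, !Cmod_R, !Rabs_pos_eq by (lra || apply pos_INR); ring).
    replace (INR N * (p k * r ^ k))%C with ((A1 + Cconj A2) - Cconj A2 - (A1 - INR N * (p k * r ^ k)))%C
      by ring.
    unfold Cminus. eapply Rle_trans; [apply Cmod_triangle|]. rewrite Cmod_opp.
    eapply Rle_trans; [apply Rplus_le_compat_r, Cmod_triangle|]. rewrite Cmod_opp, Cmod_conj.
    unfold Cminus in H1. lra. }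
  apply Rmult_le_reg_l with (INR N); [exact HN|]. unfold T in Hmain. nra.
Qed.

End Approximation.

Theorem caratheodory k : (1 <= k)%nat -> Cmod (p k) <= 2 * (1 - beta).
Proof.
  intros Hk. apply (le_of_forall_pow_le _ _ k Hk). intros r Hr.
  destruct (unit_radius_geom_bound p r Hp Hr) as (M & q & HM & Hq & Hb).
  apply (le_of_le_add_geom _ _ (4 * M * (q / (1 - q))) q Hq). intros n.
  pose proof (caratheodory_approx r M q Hr HM Hq Hb k (S n + k) Hk ltac:(lia)) as H.
  replace (S n + k - k)%nat with (S n) in H by lia. simpl pow in H.
  replace (4 * M * (q * q ^ n / (1 - q))) with (4 * M * (q / (1 - q)) * q ^ n) in H by (field; lra).
  exact H.
Qed.

End Caratheodory.

(** * The functional [J] as a power series *)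

Lemma fact_add_le d k : INR (fact (d + k)) <= INR (k + 1) ^ d * INR (fact k) * INR (fact d).
Proof.
  induction d as [|d IH]; [simpl; lra|].
  replace (S d + k)%nat with (S (d + k)) by lia. rewrite !fact_simpl, !mult_INR.
  pose proof (pos_INR (fact k)). pose proof (pos_INR (fact d)). pose proof (pos_INR (S (d + k))).
  assert (0 <= INR (k + 1) ^ d) by (apply pow_le, pos_INR).
  assert (HS : INR (S (d + k)) <= INR (k + 1) * INR (S d)) by (rewrite <- mult_INR; apply le_INR; nia).
  apply Rle_trans with (INR (S (d + k)) * (INR (k + 1) ^ d * INR (fact k) * INR (fact d)));
    [apply Rmult_le_compat_l; assumption|].
  apply Rle_trans with (INR (k + 1) * INR (S d) * (INR (k + 1) ^ d * INR (fact k) * INR (fact d)));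
    [apply Rmult_le_compat_r; [apply Rmult_le_pos; [apply Rmult_le_pos|]|]; assumption|].
  right. simpl pow. ring.
Qed.

Lemma Cmod_rus_coef_le m delta c n : (1 <= m)%nat ->
  Cmod (rus_coef m delta c n) <= INR n ^ delta * Cmod (c n) + 1.
Proof.
  intros Hm. assert (0 <= INR n ^ delta * Cmod (c n))
    by (apply Rmult_le_pos; [apply pow_le, pos_INR|apply Cmod_ge_0]).
  destruct n as [|j]; unfold rus_coef; [rewrite Cmod_0; lra|].
  destruct (Nat.eqb j 0); [rewrite Cmod_1; lra|].
  destruct (Nat.eqb (j mod m) 0); [|rewrite Cmod_0; lra].
  set (k := (j / m)%nat).
  assert (Hk : (k + 1 <= S j)%nat) by (unfold k; pose proof (Nat.Div0.div_le_upper_bound j m j); nia).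
  assert (Hf : 0 < INR (fact k) * INR (fact delta)) by (apply Rmult_lt_0_compat; apply lt_0_INR, lt_O_fact).
  assert (Hbin : INR (fact (delta + k)) / (INR (fact k) * INR (fact delta)) <= INR (S j) ^ delta).
  { apply Rmult_le_reg_r with (INR (fact k) * INR (fact delta)); [exact Hf|].
    unfold Rdiv. rewrite Rmult_assoc, Rinv_l, Rmult_1_r by lra.
    eapply Rle_trans; [apply fact_add_le|]. rewrite Rmult_assoc. apply Rmult_le_compat_r; [lra|].
    apply pow_incr. split; [apply pos_INR|apply le_INR; exact Hk]. }
  rewrite Cmod_mult, Cmod_R, Rabs_pos_eq
    by (apply Rmult_le_pos; [apply pos_INR|left; apply Rinv_0_lt_compat; exact Hf]).
  pose proof (Cmod_ge_0 (c (S j))). nra.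
Qed.

Lemma unit_radius_rus_coef m delta c : (1 <= m)%nat -> unit_radius c -> unit_radius (rus_coef m delta c).
Proof.
  intros Hm Hc. apply (unit_radius_le _ _ 1 ltac:(lra) (unit_radius_pow_INR_mult c delta Hc)).
  intros n. rewrite Cmod_mult, Cmod_pow, Cmod_R, Rabs_pos_eq by apply pos_INR.
  apply Cmod_rus_coef_le. exact Hm.
Qed.

Lemma rus_coef_m m delta c : (1 <= m)%nat ->
  rus_coef m delta c (S m) = (RtoC (INR delta + 1) * c (S m))%C.
Proof.
  intros Hm. unfold rus_coef.
  destruct (Nat.eqb_spec m 0); [lia|]. rewrite Nat.Div0.mod_same, Nat.div_same by lia.
  simpl Nat.eqb. cbv iota. f_equal. f_equal.
  rewrite Nat.add_1_r, fact_simpl, mult_INR, S_INR. simpl (INR (fact 1)).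
  field. apply INR_fact_neq_0.
Qed.

Lemma rus_coef_2m m delta c : (1 <= m)%nat ->
  rus_coef m delta c (S (2 * m)) = (RtoC ((INR delta + 1) * (INR delta + 2) / 2) * c (S (2 * m)))%C.
Proof.
  intros Hm. unfold rus_coef.
  destruct (Nat.eqb_spec (2 * m) 0); [lia|]. rewrite Nat.Div0.mod_mul, Nat.div_mul by lia.
  simpl Nat.eqb. cbv iota. f_equal. f_equal.
  replace (delta + 2)%nat with (S (S delta)) by lia. rewrite !fact_simpl, !mult_INR, !S_INR.
  change (INR 0) with 0. change (INR (fact 0)) with 1. field. apply INR_fact_neq_0.
Qed.

Lemma cderiv_eq F z l : is_derive F z l -> cderiv F z = l.
Proof.
  intros H. unfold cderiv.
  pose proof (epsilon_spec (inhabits (RtoC 0)) (fun l => @is_derive C_AbsRing C_NormedModule F z l)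
    (ex_intro _ l H)) as Hl.
  rewrite <- (is_C_derive_unique _ _ _ Hl). exact (is_C_derive_unique _ _ _ H).
Qed.

Lemma locally_unit_disk z : Cmod z < 1 ->
  @locally (AbsRing_UniformSpace C_AbsRing) z (fun w => Cmod w < 1).
Proof.
  intros Hz. assert (He : 0 < 1 - Cmod z) by lra. exists (mkposreal _ He). intros y Hy.
  change (Cmod (minus y z) < 1 - Cmod z) in Hy.
  replace y with (z + minus y z)%C by apply Cplus_minus_r.
  eapply Rle_lt_trans; [apply Cmod_triangle|lra].
Qed.

Lemma cderiv_csum c z : unit_radius c -> Cmod z < 1 ->
  cderiv (csum c) z = csum (PS_Cderive c) z.
Proof. intros Hc Hz. exact (cderiv_eq _ _ _ (is_derive_csum c z Hc Hz)). Qed.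

Lemma cderiv2_csum c z : unit_radius c -> Cmod z < 1 ->
  cderiv (cderiv (csum c)) z = csum (PS_Cderive (PS_Cderive c)) z.
Proof.
  intros Hc Hz. apply cderiv_eq.
  apply (is_derive_ext_loc (csum (PS_Cderive c))).
  - apply (filter_imp (fun w => Cmod w < 1)); [|exact (locally_unit_disk z Hz)].
    intros w Hw. symmetry. exact (cderiv_csum c w Hc Hw).
  - exact (is_derive_csum _ z (unit_radius_PS_Cderive c Hc) Hz).
Qed.

Lemma csum_decr_1 c z : unit_radius c -> Cmod z < 1 ->
  csum c z = (c 0%nat + z * csum (PS_decr_1 c) z)%C.
Proof.
  intros Hc Hz. apply csum_unique, is_pseries_pterm, is_series_decr_1.
  pose proof (proj1 (is_pseries_pterm _ _ _) (is_pseries_csum _ z (unit_radius_decr_1 c Hc) Hz)) as H.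
  match goal with |- is_series _ ?l => replace l with (z * csum (PS_decr_1 c) z)%C
    by (unfold plus, opp, pterm; simpl; ring) end.
  eapply is_series_ext; [|exact (is_series_Cmult_l z _ _ H)].
  intros n. unfold pterm, PS_decr_1. simpl. ring.
Qed.

Lemma is_pseries_Cplus c d z l1 l2 :
  is_pseries c z l1 -> is_pseries d z l2 -> is_pseries (fun n => c n + d n)%C z (l1 + l2)%C.
Proof. exact (is_pseries_plus c d z l1 l2). Qed.

Lemma is_pseries_Cminus c d z l1 l2 :
  is_pseries c z l1 -> is_pseries d z l2 -> is_pseries (fun n => c n - d n)%C z (l1 - l2)%C.
Proof. exact (is_pseries_minus c d z l1 l2). Qed.

Lemma is_pseries_Cscal (a : C) c z l :
  is_pseries c z l -> is_pseries (fun n => a * c n)%C z (a * l)%C.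
Proof. exact (is_pseries_scal a c z l (Cmult_comm _ _)). Qed.

Lemma is_pseries_monom0 (a z : C) : is_pseries (monom 0 a) z a.
Proof.
  apply is_pseries_pterm. eapply is_series_ext; [|exact (is_series_monom 0 a)].
  intros n. unfold pterm, monom. destruct (Nat.eqb_spec n 0) as [->|]; simpl; ring.
Qed.

Definition J_weight (lam gam : R) (n : nat) : R :=
  1 + INR n * (lam + gam) + lam * gam * ((INR n + 1) ^ 2 + 1).

(** For [n >= 1] the coefficient of [z^n] in [R/z], [R'] and [z R''] ([R = R^delta h]) is the
    coefficient of [z^(n+1)] in [R] times [1], [n+1] and [n (n+1)]; weighted as in [J] these
    factors add up to [J_weight n]. *)
Definition J_coef (m delta : nat) (tau : C) (lam gam : R) (c : nat -> C) (n : nat) : C :=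
  match n with
  | O => RtoC 1
  | S _ => (/ tau * J_weight lam gam n * rus_coef m delta c (S n))%C
  end.

Lemma J_coef_eq m delta tau lam gam c n :
  let rc := rus_coef m delta c in
  J_coef m delta tau lam gam c n
  = (monom 0 1 n + / tau * ((RtoC ((1 - lam) * (1 - gam)) * PS_decr_1 rc n
      + RtoC (lam * (gam + 1) + gam) * PS_Cderive rc n)
      + RtoC (lam * gam) * (PS_incr_1 (PS_Cderive (PS_Cderive rc)) n - monom 0 2 n) - monom 0 1 n))%C.
Proof.
  intros rc. destruct n as [|n]; unfold J_coef, monom, PS_decr_1, PS_incr_1, PS_Cderive; simpl Nat.eqb; cbv iota.
  - change (rc 1%nat) with (RtoC 1). change zero with (RtoC 0).
    replace (RtoC ((1 - lam) * (1 - gam)) * 1 + RtoC (lam * (gam + 1) + gam) * (INR 1 * 1)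
             + RtoC (lam * gam) * (0 - 2) - 1)%C with (RtoC 0); [ring|].
    apply injective_projections; simpl; ring.
  - unfold J_weight, rc. rewrite !S_INR.
    repeat (rewrite RtoC_plus || rewrite RtoC_mult || rewrite RtoC_minus || rewrite RtoC_pow). ring.
Qed.

Lemma is_pseries_J_coef m delta tau lam gam h c : (1 <= m)%nat ->
  (forall z, in_U z -> is_pseries c z (h z)) ->
  forall z, in_U z -> is_pseries (J_coef m delta tau lam gam c) z (J m delta tau lam gam h z).
Proof.
  intros Hm Hh z Hz. unfold in_U in Hz.
  assert (Hc : unit_radius c) by (apply unit_radius_of_is_pseries; intros w Hw; exists (h w); exact (Hh w Hw)).
  set (rc := rus_coef m delta c).
  assert (Hrc : unit_radius rc) by exact (unit_radius_rus_coef m delta c Hm Hc).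
  assert (ER : Rus m delta h = csum rc) by (unfold Rus; rewrite (coeffs_of_eq h c Hh); reflexivity).
  assert (ED : Rus_div_z m delta h z = csum (PS_decr_1 rc) z).
  { unfold Rus_div_z. destruct (excluded_middle_informative (z = RtoC 0)) as [->|Hz0].
    - symmetry. apply csum_unique. exact (is_pseries_0 (V := C_NormedModule) (PS_decr_1 rc)).
    - rewrite ER, (csum_decr_1 rc z Hrc Hz). change (rc 0%nat) with (RtoC 0). field. exact Hz0. }
  unfold J. cbv zeta. rewrite ED, ER, cderiv_csum, cderiv2_csum by assumption.
  pose proof (unit_radius_PS_Cderive _ Hrc) as Hrc1.
  pose proof (unit_radius_PS_Cderive _ Hrc1) as Hrc2.
  eapply is_pseries_ext; [intros n; symmetry; apply J_coef_eq|].
  apply is_pseries_Cplus; [apply is_pseries_monom0|]. apply is_pseries_Cscal, is_pseries_Cminus;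
    [|apply is_pseries_monom0].
  apply is_pseries_Cplus; [apply is_pseries_Cplus|]; apply is_pseries_Cscal.
  - exact (is_pseries_csum _ z (unit_radius_decr_1 _ Hrc) Hz).
  - exact (is_pseries_csum _ z Hrc1 Hz).
  - apply is_pseries_Cminus; [|apply is_pseries_monom0].
    exact (is_pseries_incr_1 _ z _ (is_pseries_csum _ z Hrc2 Hz)).
Qed.

Lemma J_coef_bound m delta tau lam gam beta h c : (1 <= m)%nat ->
  (forall z, in_U z -> is_pseries c z (h z)) ->
  (forall z, in_U z -> Re (J m delta tau lam gam h z) > beta) ->
  forall k, (1 <= k)%nat -> Cmod (J_coef m delta tau lam gam c k) <= 2 * (1 - beta).
Proof.
  intros Hm Hh HJ k Hk. pose proof (is_pseries_J_coef m delta tau lam gam h c Hm Hh) as HS.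
  apply (caratheodory _ beta); [|reflexivity| |exact Hk].
  - apply unit_radius_of_is_pseries. intros z Hz. eexists. exact (HS z Hz).
  - intros z Hz. rewrite (csum_unique _ _ _ (HS z Hz)). exact (HJ z Hz).
Qed.

Lemma J_coef_m m delta tau lam gam c : (1 <= m)%nat ->
  J_coef m delta tau lam gam c m = (/ tau * J_weight lam gam m * RtoC (INR delta + 1) * c (S m))%C.
Proof.
  intros Hm. destruct m as [|m]; [lia|]. unfold J_coef. rewrite rus_coef_m by lia. ring.
Qed.

Lemma J_coef_2m m delta tau lam gam c : (1 <= m)%nat ->
  J_coef m delta tau lam gam c (2 * m) =
  (/ tau * J_weight lam gam (2 * m) * RtoC ((INR delta + 1) * (INR delta + 2) / 2) * c (S (2 * m)))%C.
Proof.
  intros Hm. assert (E : (2 * m = S (2 * m - 1))%nat) by lia.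
  rewrite E. unfold J_coef. rewrite <- E, rus_coef_2m by lia. ring.
Qed.

(** * The first coefficients of the inverse function *)

Section InverseCoefficients.

Variables (m : nat) (a b : nat -> C).
Hypothesis Hm : (1 <= m)%nat.
Hypothesis Ha : mfold_coeffs m a.
Hypothesis Hra : unit_radius a.
Hypothesis Hrb : unit_radius b.
Hypothesis Hinv : forall z, Cmod z < 1 -> Cmod (csum a z) < 1 -> csum b (csum a z) = z.

Lemma mfold_low_coeffs i : (i < S (S (2 * m)))%nat ->
  a i = (monom 1 1 i + monom (S m) (a (S m)) i + monom (S (2 * m)) (a (S (2 * m))) i)%C.
Proof.
  intros Hi. destruct Ha as [Ha1 Ha0]. unfold monom.
  destruct (Nat.eqb_spec i 1), (Nat.eqb_spec i (S m)), (Nat.eqb_spec i (S (2 * m))); subst; try lia;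
    try (rewrite ?Ha1; ring).
  rewrite Ha0; [ring|]. intros k Hk. subst i. destruct k as [|[|[|k]]]; lia.
Qed.

Lemma csum_mfold_expansion : bigO_at0 (S (S (2 * m)))
  (fun z => csum a z - (z + a (S m) * Cpow z (S m) + a (S (2 * m)) * Cpow z (S (2 * m))))%C.
Proof.
  eapply bigO_at0_ext; [|exact (csum_sub_fsum_bigO a (S (S (2 * m))) Hra)].
  intros z. cbv beta. rewrite (fsum_pterm_ext _ _ z _ mfold_low_coeffs), !fsum_pterm_plus, !fsum_pterm_monom.
  destruct (Nat.ltb_spec 1 (S (S (2 * m)))), (Nat.ltb_spec (S m) (S (S (2 * m)))),
    (Nat.ltb_spec (S (2 * m)) (S (S (2 * m)))); try lia.
  rewrite Cpow_1_r. ring.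
Qed.

Lemma csum_mfold_sub_id : bigO_at0 (S m) (fun z => csum a z - z)%C.
Proof.
  eapply bigO_at0_ext; cycle 1.
  - apply bigO_at0_plus; [apply bigO_at0_plus|].
    + exact (bigO_at0_weaken (S m) (S (S (2 * m))) _ ltac:(lia) csum_mfold_expansion).
    + apply (bigO_at0_scal _ (a (S m))), bigO_at0_Cpow.
    + apply (bigO_at0_weaken _ (S (2 * m))); [lia|]. apply (bigO_at0_scal _ (a (S (2 * m)))), bigO_at0_Cpow.
  - intros z. cbv beta. ring.
Qed.

Lemma inverse_taylor_remainder : bigO_at0 (2 * S m)
  (fun z => z - csum b z - (csum a z - z) * csum (PS_Cderive b) z)%C.
Proof.
  destruct (bigO_at0_small _ _ csum_mfold_sub_id (1 / 4) ltac:(lra)) as (d & Hd & Hsmall).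
  refine (bigO_at0_ext_near _ _ _ _
    (csum_taylor_bigO b (fun z => csum a z - z)%C m Hrb csum_mfold_sub_id)).
  exists (Rmin d (1 / 4)). split; [apply Rmin_pos; lra|]. intros z Hz.
  assert (Hz1 : Cmod z <= 1 / 4) by (eapply Rle_trans; [exact Hz|apply Rmin_r]).
  specialize (Hsmall z (Rle_trans _ _ _ Hz (Rmin_l _ _))).
  assert (Hf : Cmod (csum a z) < 1).
  { replace (csum a z) with (z + (csum a z - z))%C by ring.
    eapply Rle_lt_trans; [apply Cmod_triangle|lra]. }
  replace (z + (csum a z - z))%C with (csum a z) by ring. rewrite Hinv by lra. reflexivity.
Qed.

Lemma inverse_low_coeffs i : (i < S m)%nat -> b i = monom 1 1 i.
Proof.
  apply (coeffs_eq_of_bigO b _ (S m) Hrb).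
  eapply bigO_at0_ext; cycle 1.
  - apply bigO_at0_plus.
    + exact (bigO_at0_weaken (S m) (2 * S m) _ ltac:(lia) (bigO_at0_scal _ (-1) _ inverse_taylor_remainder)).
    + rewrite <- (Nat.add_0_r (S m)).
      exact (bigO_at0_scal _ (-1) _ (bigO_at0_mult _ _ _ _ csum_mfold_sub_id
        (csum_bounded_at0 _ (unit_radius_PS_Cderive b Hrb)))).
  - intros z. cbv beta. rewrite fsum_pterm_monom.
    destruct (Nat.ltb_spec 1 (S m)); [|lia]. rewrite Cpow_1_r. ring.
Qed.

Lemma inverse_derive_expansion : bigO_at0 (S m)
  (fun z => csum (PS_Cderive b) z - (1 + INR (S m) * b (S m) * Cpow z m))%C.
Proof.
  eapply bigO_at0_ext; [|exact (csum_sub_fsum_bigO _ (S m) (unit_radius_PS_Cderive b Hrb))].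
  intros z. cbv beta. f_equal.
  rewrite (fsum_pterm_ext _ (fun i => monom 0 1 i + monom m (INR (S m) * b (S m)) i)%C).
  - rewrite fsum_pterm_plus, !fsum_pterm_monom.
    destruct (Nat.ltb_spec 0 (S m)), (Nat.ltb_spec m (S m)); try lia. simpl. ring.
  - intros i Hi. unfold PS_Cderive, monom.
    destruct (Nat.eqb_spec i 0) as [->|Hi0]; [|destruct (Nat.eqb_spec i m) as [->|Him]].
    + destruct (Nat.eqb_spec 0 m); [lia|]. rewrite inverse_low_coeffs by lia. unfold monom. simpl. ring.
    + ring.
    + rewrite inverse_low_coeffs by lia. unfold monom.
      destruct (Nat.eqb_spec (S i) 1); [lia|]. ring.
Qed.

Lemma inverse_expansion : bigO_at0 (S (S (2 * m)))
  (fun z => csum b z - (z - a (S m) * Cpow z (S m)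
     - (a (S (2 * m)) + INR (S m) * b (S m) * a (S m)) * Cpow z (S (2 * m))))%C.
Proof.
  eapply bigO_at0_ext; cycle 1.
  - apply (bigO_at0_scal _ (-1)). apply bigO_at0_plus; [apply bigO_at0_plus; [apply bigO_at0_plus|]|].
    + replace (S (S (2 * m))) with (2 * S m)%nat by lia. exact inverse_taylor_remainder.
    + rewrite <- (Nat.add_0_r (S (S (2 * m)))).
      exact (bigO_at0_mult _ _ _ _ csum_mfold_expansion
        (csum_bounded_at0 _ (unit_radius_PS_Cderive b Hrb))).
    + replace (S (S (2 * m))) with (S m + S m)%nat by lia.
      refine (bigO_at0_mult _ _ _ _ _ inverse_derive_expansion).
      apply (bigO_at0_plus _ (fun z => a (S m) * Cpow z (S m))%C
                             (fun z => a (S (2 * m)) * Cpow z (S (2 * m)))%C).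
      * apply bigO_at0_scal, bigO_at0_Cpow.
      * apply (bigO_at0_weaken _ (S (2 * m))); [lia|]. apply bigO_at0_scal, bigO_at0_Cpow.
    + apply (bigO_at0_weaken _ (S (3 * m))); [lia|].
      apply (bigO_at0_scal _ (a (S (2 * m)) * (INR (S m) * b (S m)))), bigO_at0_Cpow.
  - intros z. cbv beta.
    assert (E2 : Cpow z (S (2 * m)) = (Cpow z (S m) * Cpow z m)%C)
      by (rewrite <- Cpow_add_r; f_equal; lia).
    assert (E3 : Cpow z (S (3 * m)) = (Cpow z (S m) * Cpow z m * Cpow z m)%C)
      by (rewrite <- !Cpow_add_r; f_equal; lia).
    rewrite E2, E3. ring.
Qed.

Theorem inverse_coeffs :
  b (S m) = (- a (S m))%C /\ b (S (2 * m)) = (INR (S m) * a (S m) ^ 2 - a (S (2 * m)))%C.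
Proof.
  set (t := fun i => (monom 1 1 i + monom (S m) (- a (S m)) i
    + monom (S (2 * m)) (- (a (S (2 * m)) + INR (S m) * b (S m) * a (S m))) i)%C).
  assert (Hcoef : forall i, (i < S (S (2 * m)))%nat -> b i = t i).
  { apply (coeffs_eq_of_bigO b t _ Hrb).
    eapply bigO_at0_ext; [|exact inverse_expansion].
    intros z. cbv beta. unfold t. rewrite !fsum_pterm_plus, !fsum_pterm_monom.
    destruct (Nat.ltb_spec 1 (S (S (2 * m)))), (Nat.ltb_spec (S m) (S (S (2 * m)))),
      (Nat.ltb_spec (S (2 * m)) (S (S (2 * m)))); try lia.
    rewrite Cpow_1_r. ring. }
  assert (Hb1 : b (S m) = (- a (S m))%C).
  { rewrite Hcoef by lia. unfold t, monom.
    destruct (Nat.eqb_spec (S m) 1), (Nat.eqb_spec (S m) (S (2 * m))); try lia.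
    rewrite Nat.eqb_refl. ring. }
  split; [exact Hb1|].
  rewrite Hcoef by lia. unfold t, monom.
  destruct (Nat.eqb_spec (S (2 * m)) 1), (Nat.eqb_spec (S (2 * m)) (S m)); try lia.
  rewrite Nat.eqb_refl, Hb1. ring.
Qed.

End InverseCoefficients.

(** * Coefficient bounds *)

Lemma J_weight_ge_1 lam gam n : 0 <= lam -> 0 <= gam -> 1 <= J_weight lam gam n.
Proof.
  intros Hl Hg. unfold J_weight. pose proof (pos_INR n).
  assert (0 <= lam * gam) by (apply Rmult_le_pos; assumption).
  assert (0 <= (INR n + 1) ^ 2 + 1) by (pose proof (pow2_ge_0 (INR n + 1)); lra).
  assert (0 <= INR n * (lam + gam)) by (apply Rmult_le_pos; lra).
  assert (0 <= lam * gam * ((INR n + 1) ^ 2 + 1)) by (apply Rmult_le_pos; assumption).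
  lra.
Qed.

Lemma J_weight_double lam gam m : J_weight lam gam (2 * m) = Phi1 lam gam m.
Proof. unfold J_weight, Phi1. rewrite mult_INR. simpl (INR 2). ring. Qed.

Lemma Cmod_Cinv_scal (tau x : C) (w : R) : tau <> RtoC 0 -> 0 <= w ->
  Cmod (/ tau * w * x)%C = w * Cmod x / Cmod tau.
Proof.
  intros Htau Hw. rewrite !Cmod_mult, Cmod_inv, Cmod_R, Rabs_pos_eq by assumption.
  unfold Rdiv. ring.
Qed.

Lemma le_div_of_scaled_le x w t B : 0 < w -> 0 < t -> w * x / t <= B -> x <= B * t / w.
Proof.
  intros Hw Ht H. replace x with (w * x / t * t / w) by (field; repeat split; lra).
  unfold Rdiv. apply Rmult_le_compat_r; [left; apply Rinv_0_lt_compat; exact Hw|].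
  apply Rmult_le_compat_r; [lra|exact H].
Qed.

Lemma le_2_sqrt x y : 0 <= x -> x ^ 2 <= 4 * y -> x <= 2 * sqrt y.
Proof.
  intros Hx Hxy.
  assert (Hy : 0 <= y) by (pose proof (pow2_ge_0 x); lra).
  rewrite <- (sqrt_pow2 x Hx), <- (sqrt_pow2 2) by lra.
  rewrite <- sqrt_mult by (try apply pow2_ge_0; lra). apply sqrt_le_1_alt. simpl. lra.
Qed.

Section CoefficientBounds.

Variables (lam gam beta : R) (tau : C) (delta m : nat) (a b : nat -> C).
Hypothesis Hlam : 0 <= lam.
Hypothesis Hgam : 0 <= gam.
Hypothesis Htau : tau <> RtoC 0.
Hypothesis Hm : (1 <= m)%nat.
Hypothesis Ha : forall k, (1 <= k)%nat -> Cmod (J_coef m delta tau lam gam a k) <= 2 * (1 - beta).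
Hypothesis Hb : forall k, (1 <= k)%nat -> Cmod (J_coef m delta tau lam gam b k) <= 2 * (1 - beta).
Hypothesis Hb2 : b (S (2 * m)) = (INR (S m) * a (S m) ^ 2 - a (S (2 * m)))%C.

Lemma Phi1_ge_1 : 1 <= Phi1 lam gam m.
Proof. rewrite <- J_weight_double. apply J_weight_ge_1; assumption. Qed.

Lemma coeff_m_bound :
  Cmod (a (S m)) <= 2 * Cmod tau * (1 - beta) / ((INR delta + 1) * J_weight lam gam m).
Proof.
  pose proof (J_weight_ge_1 lam gam m Hlam Hgam) as HW.
  pose proof (pos_INR delta) as Hdelta. pose proof (proj1 (Cmod_gt_0 tau) Htau) as Htau0.
  pose proof (Ha m Hm) as H. rewrite J_coef_m, <- Cmult_assoc, Cmod_Cinv_scal, Cmod_mult, Cmod_R,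
    Rabs_pos_eq in H by (exact Htau || exact Hm || lra).
  replace (2 * Cmod tau * (1 - beta)) with (2 * (1 - beta) * Cmod tau) by ring.
  apply le_div_of_scaled_le; [nra|exact Htau0|]. lra.
Qed.

Lemma coeff_2m_bound :
  Cmod (a (S (2 * m))) <= 4 * Cmod tau * (1 - beta) / ((INR delta + 1) * (INR delta + 2) * Phi1 lam gam m).
Proof.
  pose proof (Phi1_ge_1) as HW2. pose proof (pos_INR delta) as Hdelta. pose proof (proj1 (Cmod_gt_0 tau) Htau) as Htau0.
  pose proof (J_weight_ge_1 lam gam (2 * m) Hlam Hgam) as HW.
  pose proof (Ha (2 * m)%nat ltac:(lia)) as H.
  rewrite J_coef_2m, <- Cmult_assoc, Cmod_Cinv_scal, Cmod_mult, Cmod_R, Rabs_pos_eq, J_weight_double in H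
    by (exact Htau || exact Hm || nra).
  replace (4 * Cmod tau * (1 - beta) / ((INR delta + 1) * (INR delta + 2) * Phi1 lam gam m))
    with (2 * (1 - beta) * Cmod tau / (Phi1 lam gam m * ((INR delta + 1) * (INR delta + 2) / 2)))
    by (field; repeat split; lra).
  apply le_div_of_scaled_le; [nra|exact Htau0|]. lra.
Qed.

Lemma coeff_m_sq_bound :
  Cmod (a (S m)) ^ 2 <= 4 * (2 * Cmod tau * (1 - beta) /
    ((INR delta + 1) * (INR delta + 2) * (INR m + 1) * Phi1 lam gam m)).
Proof.
  pose proof (Phi1_ge_1) as HW2. pose proof (pos_INR delta) as Hdelta. pose proof (proj1 (Cmod_gt_0 tau) Htau) as Htau0.
  pose proof (pos_INR m) as Hm0.
  set (D := (INR delta + 1) * (INR delta + 2) / 2).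
  pose proof (Ha (2 * m)%nat ltac:(lia)) as H1. pose proof (Hb (2 * m)%nat ltac:(lia)) as H2.
  rewrite J_coef_2m in H1, H2 by exact Hm. rewrite Hb2 in H2. fold D in H1, H2.
  assert (Hsum : Cmod (/ tau * J_weight lam gam (2 * m) * (D * INR (S m) * a (S m) ^ 2))%C <= 4 * (1 - beta)).
  { replace (/ tau * J_weight lam gam (2 * m) * (D * INR (S m) * a (S m) ^ 2))%C
      with ((/ tau * J_weight lam gam (2 * m) * D * a (S (2 * m)))
            + (/ tau * J_weight lam gam (2 * m) * D * (INR (S m) * a (S m) ^ 2 - a (S (2 * m)))))%C
      by ring.
    eapply Rle_trans; [apply Cmod_triangle|lra]. }
  pose proof (J_weight_ge_1 lam gam (2 * m) Hlam Hgam) as HW.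
  rewrite Cmod_Cinv_scal, !Cmod_mult, Cmod_pow, !Cmod_R, !Rabs_pos_eq, J_weight_double, S_INR in Hsum
    by (exact Htau || apply pos_INR || (unfold D; nra)).
  replace (4 * (2 * Cmod tau * (1 - beta) /
    ((INR delta + 1) * (INR delta + 2) * (INR m + 1) * Phi1 lam gam m)))
    with (4 * (1 - beta) * Cmod tau / (Phi1 lam gam m * (D * (INR m + 1)))) by (unfold D; field; repeat split; lra).
  apply le_div_of_scaled_le; [apply Rmult_lt_0_compat; [lra|apply Rmult_lt_0_compat; [unfold D; nra|lra]]|exact Htau0|].
  replace (Phi1 lam gam m * (D * (INR m + 1)) * Cmod (a (S m)) ^ 2 / Cmod tau)
    with (Phi1 lam gam m * (D * (INR m + 1) * Cmod (a (S m)) ^ 2) / Cmod tau) by (field; repeat split; lra).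
  exact Hsum.
Qed.

End CoefficientBounds.

Theorem theorem2 (lam gam beta : R) (tau : C) (delta m : nat)
    (f : C -> C) (a : nat -> C) :
  0 <= lam -> 0 <= gam <= 1 -> 0 <= beta < 1 -> tau <> RtoC 0 -> (1 <= m)%nat ->
  mfold_coeffs m a -> (forall z, in_U z -> is_pseries a z (f z)) ->
  in_Theta m tau lam gam delta beta f ->
  Cmod (a (m + 1)%nat) <=
    Rmin (2 * Cmod tau * (1 - beta) /
            ((INR delta + 1) *
             (1 + INR m * (lam + gam) + lam * gam * ((INR m + 1) ^ 2 + 1))))
         (2 * sqrt (2 * Cmod tau * (1 - beta) /
            ((INR delta + 1) * (INR delta + 2) * (INR m + 1) * Phi1 lam gam m)))
  /\
  Cmod (a (2 * m + 1)%nat) <=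
    4 * Cmod tau * (1 - beta) /
      ((INR delta + 1) * (INR delta + 2) *
       (1 + 2 * (lam + gam) * INR m + lam * gam * ((2 * INR m + 1) ^ 2 + 1))).
Proof.
  intros Hlam [Hgam _] _ Htau Hm Ha Hfa (g & (_ & _ & [b Hgb] & _ & Hinv) & HJf & HJg).
  assert (Hra : unit_radius a)
    by (apply unit_radius_of_is_pseries; intros z Hz; exists (f z); exact (Hfa z Hz)).
  assert (Hrb : unit_radius b)
    by (apply unit_radius_of_is_pseries; intros z Hz; exists (g z); exact (Hgb z Hz)).
  assert (Hinv' : forall z, Cmod z < 1 -> Cmod (csum a z) < 1 -> csum b (csum a z) = z).
  { intros z Hz Hfz. rewrite (csum_unique _ _ _ (Hfa z Hz)) in Hfz |- *.
    rewrite (csum_unique _ _ _ (Hgb _ Hfz)). exact (Hinv z Hz Hfz). }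
  destruct (inverse_coeffs m a b Hm Ha Hra Hrb Hinv') as [_ Hb2].
  pose proof (J_coef_bound m delta tau lam gam beta f a Hm Hfa HJf) as Ca.
  pose proof (J_coef_bound m delta tau lam gam beta g b Hm Hgb HJg) as Cb.
  rewrite !Nat.add_1_r. split.
  - apply Rmin_glb; [exact (coeff_m_bound lam gam beta tau delta m a Hlam Hgam Htau Hm Ca)|].
    apply le_2_sqrt; [apply Cmod_ge_0|].
    exact (coeff_m_sq_bound lam gam beta tau delta m a b Hlam Hgam Htau Hm Ca Cb Hb2).
  - exact (coeff_2m_bound lam gam beta tau delta m a Hlam Hgam Htau Hm Ca).
Qed.
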